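(* Assume Hypothesis (LD). Assume the $\rho$-basic classes contained in $M_1$ are finitely many, $K_1,\dots,K_v$, each closed. Let $K_j$ be one of them which is not a $\rho$-quasiattractor. Then there exists $\eta>0$ with the following property. For every $\gamma>0$ there exist $\varepsilon_0>0$ and a function $\zeta:(0,\varepsilon_0)\to[0,1]$ with $\lim_{\varepsilon\to0}\zeta(\varepsilon)=0$ such that $$\sup_{x\in N^\eta(K_j)}\mathbb{P}_x\big[\tau^\varepsilon_{N^\eta(K_j)}>e^{\gamma/\varepsilon}\big]\le\zeta(\varepsilon)\quad\text{for all }\varepsilon<\varepsilon_0.$$ Here $\tau^\varepsilon_V=\inf\{n\ge0:X^\varepsilon_n\notin V\}$.
   Context: Setting. Let $M\subset\mathbb{R}^d$ be closed; all topological notions are relative to $M$. Let $F:M\to M$ be continuous with $\|F\|:=\sup_{x\in M}\|F(x)\|<\infty$. For $A\subset M$ and $\delta>0$, put $N^\delta(A)=\{x\in M:\inf_{y\in A}\|x-y\|<\delta\}$, and let $d(x,y)=\max_i|x_i-y_i|$. Let $\{X^\varepsilon\}_{\varepsilon>0}$ be a family of time-homogeneous Markov chains on $M$ with transition kernels $p^\varepsilon(x,\Gamma)$. $\mathbb{P}_x$ is the law of the chain with $X^\varepsilon_0=x$. Assume $M=M_0\cup M_1$ (disjoint), where $M_0$ is closed, $F(M_0)\subseteq M_0$, $F(M_1)\subseteq M_1$, and $p^\varepsilon(x,M_1)=0$ for all $\varepsilon>0$ and $x\in M_0$. $\rho$-chain recurrence. Given $\rho:M\times M\to[0,+\infty]$,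 for $\xi=(\xi_0,\dots,\xi_n)\in M^{n+1}$ set $A_n(\xi)=\sum_{i=0}^{n-1}\rho(\xi_i,\xi_{i+1})$. Set $B_\rho(x,y)=\inf\{A_n(\xi):n\ge1,\ \xi\in M^{n+1},\ \xi_0=x,\ \xi_n=y\}$. Write $x<_\rho y$ if $B_\rho(x,y)=0$, and $x\sim_\rho y$ if $x<_\rho y$ and $y<_\rho x$. Let $\mathcal{R}_\rho=\{x:x\sim_\rho x\}$. The $\rho$-basic classes are the equivalence classes $[x]_\rho$ of $\sim_\rho$ on $\mathcal{R}_\rho$. Write $[x]_\rho<_\rho[y]_\rho$ if $x<_\rho y$. A $\rho$-quasiattractor is a maximal $\rho$-basic class. Hypothesis (LD). There is $\rho:M\times M\to[0,+\infty]$ such that: (i) $\rho$ is continuous on $M_1\times M$; (ii) $\rho(x,y)=0$ iff $y=F(x)$; (iii) for every $\beta>0$, $\inf\{\rho(x,y):x,y\in M,\ d(F(x),y)>\beta\}>0$; (iv) lower bound: for every compact $K\subset M_1$, every open ball $U$ of $M$ and every $\eta>0$, there is $\varepsilon_0>0$ such that $\varepsilon\log p^\varepsilon(x,U)\ge-\inf_{y\in U}\rho(x,y)-\eta$ for all $x\in K$ and $\varepsilon<\varepsilon_0$; (v) upper bound: for every closed $C\subset M$ and every $\eta>0$, there is $\varepsilon_0>0$ such that $\varepsilon\log p^\varepsilon(x,C)\le-\inf_{y\in C}\rho(x,y)+\eta$ for all $x\in M$ and $\varepsilon<\varepsilon_0$. *)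

From Stdlib Require Import Reals Lra ZArith List Classical ClassicalEpsilon.
From Stdlib Require Vectors.Fin.
Open Scope R_scope.

Definition Pt (d : nat) := Fin.t d -> R.
Definition set (d : nat) := Pt d -> Prop.

Fixpoint fsum (n : nat) : (Fin.t n -> R) -> R :=
  match n with
  | O => fun _ => 0
  | S m => fun f => f Fin.F1 + fsum m (fun i => f (Fin.FS i))
  end.

Fixpoint fmax (n : nat) : (Fin.t n -> R) -> R :=
  match n with
  | O => fun _ => 0
  | S m => fun f => Rmax (f Fin.F1) (fmax m (fun i => f (Fin.FS i)))
  end.

Definition norm {d} (x : Pt d) : R := sqrt (fsum d (fun i => x i ^ 2)).
Definition dist {d} (x y : Pt d) : R := norm (fun i => x i - y i).
Definition dmax {d} (x y : Pt d) : R := fmax d (fun i => Rabs (x i - y i)).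

Definition is_open {d} (U : set d) : Prop :=
  forall x, U x -> exists r, 0 < r /\ forall y, dist y x < r -> U y.
Definition is_closed {d} (C : set d) : Prop :=
  forall x, (forall e, 0 < e -> exists y, C y /\ dist x y < e) -> C x.
Definition ropen {d} (M U : set d) : Prop :=
  (forall x, U x -> M x) /\
  forall x, U x -> exists r, 0 < r /\ forall y, M y -> dist y x < r -> U y.
Definition rclosed {d} (M C : set d) : Prop :=
  (forall x, C x -> M x) /\
  forall x, M x -> (forall e, 0 < e -> exists y, C y /\ dist x y < e) -> C x.
Definition is_open_ball {d} (M U : set d) : Prop :=
  exists c r, M c /\ 0 < r /\ forall y, U y <-> (M y /\ dist y c < r).
Definition compact {d} (K : set d) : Prop :=
  forall (I : Type) (U : I -> set d),
    (forall i, is_open (U i)) -> (forall x, K x -> exists i, U i x) ->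
    exists l : list I, forall x, K x -> exists i, In i l /\ U i x.
Definition rcontinuous {d} (M : set d) (F : Pt d -> Pt d) : Prop :=
  forall x, M x -> forall e, 0 < e -> exists del, 0 < del /\
    forall y, M y -> dist y x < del -> dist (F y) (F x) < e.
Definition Nbhd {d} (M A : set d) (del : R) : set d :=
  fun x => M x /\ exists y, A y /\ dist x y < del.

Inductive ER := EFin (r : R) | EInf.
Definition ele (a b : ER) : Prop :=
  match a, b with
  | _, EInf => True
  | EInf, EFin _ => False
  | EFin x, EFin y => x <= y
  end.
Definition elt (a b : ER) : Prop := ele a b /\ a <> b.
Definition eadd (a b : ER) : ER :=
  match a, b with EFin x, EFin y => EFin (x + y) | _, _ => EInf end.
(* infimum in [0,+oo] (inf of the empty set is +oo) *)
Definition einf (S : ER -> Prop) : ER :=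
  epsilon (inhabits EInf)
    (fun e => (forall y, S y -> ele e y) /\
              (forall b, (forall y, S y -> ele b y) -> ele b e)).
Definition einf_over {d} (A : set d) (f : Pt d -> ER) : ER :=
  einf (fun a => exists y, A y /\ a = f y).

Fixpoint esum (n : nat) (f : nat -> ER) : ER :=
  match n with O => EFin 0 | S m => eadd (esum m f) (f m) end.
Definition Acost {d} (rho : Pt d -> Pt d -> ER) (n : nat) (xi : nat -> Pt d) : ER :=
  esum n (fun i => rho (xi i) (xi (S i))).
Definition Brho {d} (M : set d) (rho : Pt d -> Pt d -> ER) (x y : Pt d) : ER :=
  einf (fun a => exists (n : nat) (xi : nat -> Pt d),
          (1 <= n)%nat /\ (forall i, (i <= n)%nat -> M (xi i)) /\
          xi O = x /\ xi n = y /\ a = Acost rho n xi).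
Definition rlt {d} M rho (x y : Pt d) : Prop := Brho M rho x y = EFin 0.
Definition rsim {d} M rho (x y : Pt d) : Prop := rlt M rho x y /\ rlt M rho y x.
Definition Rrec {d} M rho : set d := fun x => M x /\ rsim M rho x x.
Definition rclass {d} M rho (x : Pt d) : set d := fun y => Rrec M rho y /\ rsim M rho y x.
Definition basic_class {d} M rho (K : set d) : Prop :=
  exists x, Rrec M rho x /\ forall y, K y <-> rclass M rho x y.
Definition class_lt {d} M rho (K K' : set d) : Prop :=
  exists x y, K x /\ K' y /\ rlt M rho x y.
Definition quasiattractor {d} M rho (K : set d) : Prop :=
  basic_class M rho K /\
  forall K', basic_class M rho K' -> class_lt M rho K K' -> forall z, K' z <-> K z.

Inductive borel {d} (M : set d) : set d -> Prop :=
| borel_open U : ropen M U -> borel M U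
| borel_compl A : borel M A -> borel M (fun x => M x /\ ~ A x)
| borel_union (A : nat -> set d) : (forall n, borel M (A n)) ->
                                   borel M (fun x => exists n, A n x)
| borel_ext A B : borel M A -> (forall x, A x <-> B x) -> borel M B.

Definition is_prob {d} (M : set d) (mu : set d -> R) : Prop :=
  mu M = 1 /\ (forall A, borel M A -> 0 <= mu A) /\
  forall A : nat -> set d, (forall n, borel M (A n)) ->
    (forall n m x, n <> m -> A n x -> A m x -> False) ->
    infinite_sum (fun n => mu (A n)) (mu (fun x => exists n, A n x)).

Definition is_kernel {d} (M : set d) (p : Pt d -> set d -> R) : Prop :=
  (forall x, M x -> is_prob M (p x)) /\
  forall A, borel M A -> forall a, borel M (fun x => M x /\ a < p x A).

Definition ind (P : Prop) : R := if excluded_middle_informative P then 1 else 0.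
Definition sup (S : R -> Prop) : R := epsilon (inhabits 0) (is_lub S).


Fixpoint sfun {d} (l : list (R * set d)) (x : Pt d) : R :=
  match l with nil => 0 | (c, A) :: l' => c * ind (A x) + sfun l' x end.
Fixpoint smeas {d} (mu : set d -> R) (l : list (R * set d)) : R :=
  match l with nil => 0 | (c, A) :: l' => c * mu A + smeas mu l' end.
Definition integral {d} (M : set d) (mu : set d -> R) (f : Pt d -> R) : R :=
  sup (fun v => exists l : list (R * set d),
         Forall (fun cA => 0 <= fst cA /\ borel M (snd cA)) l /\
         (forall x, M x -> sfun l x <= f x) /\ v = smeas mu l).

(* surv M p V n x = P_x[X_0, ..., X_n all in V] for the chain with kernel p *)
Fixpoint surv {d} (M : set d) (p : Pt d -> set d -> R) (V : set d) (n : nat)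
  (x : Pt d) : R :=
  match n with
  | O => ind (V x)
  | S m => ind (V x) * integral M (p x) (surv M p V m)
  end.
(* P_x[tau_V > t] for t > 0, where tau_V = inf{n >= 0 : X_n notin V}:
   tau_V > t  iff  tau_V >= up t  iff  X_0,...,X_{up t - 1} in V *)
Definition prob_tau_gt {d} (M : set d) (p : Pt d -> set d -> R) (V : set d)
  (t : R) (x : Pt d) : R :=
  surv M p V (Z.to_nat (up t) - 1)%nat x.

Definition Setting {d} (M M0 : set d) (F : Pt d -> Pt d)
  (p : R -> Pt d -> set d -> R) : Prop :=
  is_closed M /\
  (forall x, M x -> M (F x)) /\ rcontinuous M F /\
  (exists B, forall x, M x -> norm (F x) <= B) /\
  (forall eps, 0 < eps -> is_kernel M (p eps)) /\
  (forall x, M0 x -> M x) /\ rclosed M M0 /\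
  (forall x, M0 x -> M0 (F x)) /\
  (forall x, M x -> ~ M0 x -> ~ M0 (F x)) /\
  (forall eps x, 0 < eps -> M0 x -> p eps x (fun y => M y /\ ~ M0 y) = 0).

Definition M1of {d} (M M0 : set d) : set d := fun x => M x /\ ~ M0 x.

Definition LD {d} (M M0 : set d) (F : Pt d -> Pt d)
  (p : R -> Pt d -> set d -> R) (rho : Pt d -> Pt d -> ER) : Prop :=
  let M1 := M1of M M0 in
  (forall x y, ele (EFin 0) (rho x y)) /\
  (forall x y, M1 x -> M y ->
     match rho x y with
     | EFin r => forall e, 0 < e -> exists del, 0 < del /\
         forall x' y', M1 x' -> M y' -> dist x x' < del -> dist y y' < del ->
           exists r', rho x' y' = EFin r' /\ Rabs (r' - r) < e
     | EInf => forall b, exists del, 0 < del /\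
         forall x' y', M1 x' -> M y' -> dist x x' < del -> dist y y' < del ->
           elt (EFin b) (rho x' y')
     end) /\
  (forall x y, M x -> M y -> (rho x y = EFin 0 <-> y = F x)) /\
  (forall beta, 0 < beta ->
     elt (EFin 0) (einf (fun a => exists x y, M x /\ M y /\
                          dmax (F x) y > beta /\ a = rho x y))) /\
  (forall K U eta, compact K -> (forall x, K x -> M1 x) -> is_open_ball M U ->
     0 < eta -> exists eps0, 0 < eps0 /\
     forall x eps, K x -> 0 < eps -> eps < eps0 ->
       match einf_over U (rho x) with
       | EFin r => exp (- (r + eta) / eps) <= p eps x U
       | EInf => True
       end) /\
  (forall C eta, rclosed M C -> 0 < eta -> exists eps0, 0 < eps0 /\
     forall x eps, M x -> 0 < eps -> eps < eps0 ->
       match einf_over C (rho x) with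
       | EFin r => p eps x C <= exp ((eta - r) / eps)
       | EInf => p eps x C = 0
       end).

From Stdlib Require Import Reals Lra Lia ZArith List Classical ClassicalEpsilon
  FunctionalExtensionality PropExtensionality.
Open Scope R_scope.

(* Since [Kj] is not a quasiattractor, every point of [M] is joined by chains of arbitrarily
   small rho-cost to points at distance [2 eta] from [Kj]: the orbit of a point either gets
   that far, or it accumulates at a recurrent point near [Kj]; the rho-class of that point
   meets [M0] or is one of the finitely many closed classes in [M1], hence, by separation,
   [Kj] itself, and from [Kj] one chains to a higher class whose points never return.
   Following such a chain of cost below [gamma / 4], continuity of rho and the large
   deviation lower bound make the chain leave [N^eta(Kj)] within [N] steps with probability
   at least [exp (- gamma / (2 eps))], uniformly by compactness.  The Markov property then
   bounds [P_x[tau > exp (gamma / eps)]] by [exp (- (exp (gamma / (2 eps)) / N - 1))]. *)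

Lemma set_ext {d} (A B : set d) : (forall x, A x <-> B x) -> A = B.
Proof.
  intro H; apply functional_extensionality; intro x.
  apply propositional_extensionality; auto.
Qed.

(** * Infima and sums in [0, +oo] *)

Definition nonneg_set (S : ER -> Prop) := forall a, S a -> ele (EFin 0) a.

(* The greatest lower bound is [- sup {- r | S (EFin r)}], or [+oo] if [S] has no finite
   element. *)
Lemma nonneg_glb_exists (S : ER -> Prop) : nonneg_set S ->
  exists e, (forall y, S y -> ele e y) /\
            (forall b, (forall y, S y -> ele b y) -> ele b e).
Proof.
  intro Hn.
  destruct (classic (exists r, S (EFin r))) as [[r0 Hr0]|Hno].
  - set (E := fun x => exists r, S (EFin r) /\ x = - r).
    assert (Hb : bound E).
    { exists 0. intros x [r [Hr ->]]. specialize (Hn _ Hr); simpl in Hn; lra. }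
    assert (He : exists x, E x) by (exists (-r0); exists r0; auto).
    destruct (completeness E Hb He) as [m [Hm1 Hm2]].
    exists (EFin (-m)). split.
    + intros [y|] Hy; simpl; auto.
      assert (E (-y)) by (exists y; auto). specialize (Hm1 _ H). lra.
    + intros [b|] Hb'.
      * simpl. enough (-b >= m) by lra.
        apply Rle_ge, Hm2. intros x [r [Hr ->]]. specialize (Hb' _ Hr). simpl in Hb'. lra.
      * specialize (Hb' _ Hr0). simpl in Hb'. contradiction.
  - exists EInf. split.
    + intros [y|] Hy; simpl; auto. exfalso; apply Hno; eauto.
    + intros b _; destruct b; simpl; auto.
Qed.

Lemma einf_spec (S : ER -> Prop) : nonneg_set S ->
  (forall y, S y -> ele (einf S) y) /\
  (forall b, (forall y, S y -> ele b y) -> ele b (einf S)).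
Proof.
  intro Hn. unfold einf.
  apply (epsilon_spec (inhabits EInf) (fun e => (forall y, S y -> ele e y) /\
              (forall b, (forall y, S y -> ele b y) -> ele b e))).
  apply nonneg_glb_exists; auto.
Qed.

Lemma einf_le (S : ER -> Prop) a : nonneg_set S -> S a -> ele (einf S) a.
Proof. intros Hn Ha; apply (proj1 (einf_spec S Hn)); auto. Qed.

Lemma einf_ge (S : ER -> Prop) b : nonneg_set S ->
  (forall y, S y -> ele b y) -> ele b (einf S).
Proof. intros Hn Hb; apply (proj2 (einf_spec S Hn)); auto. Qed.

Lemma ele_antisym a b : ele a b -> ele b a -> a = b.
Proof. destruct a, b; simpl; intros; try contradiction; auto. f_equal; lra. Qed.

Lemma eadd_EFin_inv a b s : eadd a b = EFin s ->
  exists x y, a = EFin x /\ b = EFin y /\ s = x + y.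
Proof. destruct a, b; simpl; intro H; try discriminate. injection H; intro; subst; eauto. Qed.

Lemma esum_nonneg n f : (forall i, ele (EFin 0) (f i)) -> ele (EFin 0) (esum n f).
Proof.
  intro H; induction n; simpl; [lra|].
  specialize (H n). destruct (esum n f), (f n); simpl in *; auto; lra.
Qed.

Lemma esum_EFin_term n f s : (forall i, ele (EFin 0) (f i)) -> esum n f = EFin s ->
  forall i, (i < n)%nat -> exists r, f i = EFin r /\ 0 <= r <= s.
Proof.
  intro H; revert s; induction n; intros s Hs i Hi; [lia|].
  simpl in Hs. destruct (eadd_EFin_inv _ _ _ Hs) as [a [b [Ea [Eb ->]]]].
  pose proof (esum_nonneg n f H) as Ha. rewrite Ea in Ha; simpl in Ha.
  pose proof (H n) as Hb; rewrite Eb in Hb; simpl in Hb.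
  destruct (Nat.eq_dec i n) as [->|Hin].
  - exists b. split; auto; lra.
  - destruct (IHn a Ea i ltac:(lia)) as [r [? ?]]. exists r; split; auto; lra.
Qed.

Lemma esum_ext n f g : (forall i, (i < n)%nat -> f i = g i) -> esum n f = esum n g.
Proof.
  induction n; intros H; simpl; auto.
  rewrite IHn by (intros; apply H; lia). rewrite H by lia; auto.
Qed.

Lemma esum_add n m f :
  esum (n + m) f = eadd (esum n f) (esum m (fun i => f (n + i)%nat)).
Proof.
  induction m; simpl.
  - rewrite Nat.add_0_r. destruct (esum n f); simpl; auto. f_equal; lra.
  - rewrite Nat.add_succ_r; simpl. rewrite IHm.
    destruct (esum n f), (esum m _), (f (n+m)%nat); simpl; auto. f_equal; lra.
Qed.

(** * Euclidean distance *)

Lemma fsum_ext d (f g : Fin.t d -> R) : (forall i, f i = g i) -> fsum d f = fsum d g.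
Proof. revert f g; induction d; intros f g H; simpl; auto. rewrite H; f_equal; auto. Qed.

Lemma fsum_nonneg d (f : Fin.t d -> R) : (forall i, 0 <= f i) -> 0 <= fsum d f.
Proof.
  revert f; induction d; intros f H; simpl; [lra|].
  pose proof (H Fin.F1). pose proof (IHd (fun i => f (Fin.FS i)) (fun i => H _)). lra.
Qed.

Lemma fsum_ge_term d (f : Fin.t d -> R) i : (forall i, 0 <= f i) -> f i <= fsum d f.
Proof.
  revert f; induction i as [n|n i IH]; intros f H; simpl.
  - pose proof (fsum_nonneg n (fun i => f (Fin.FS i)) (fun j => H _)). lra.
  - pose proof (IH (fun j => f (Fin.FS j)) (fun j => H _)). pose proof (H Fin.F1).
    simpl in *. lra.
Qed.

Lemma fsum_sq_le_dim d (c : Fin.t d -> R) : (forall i, Rabs (c i) <= 1) ->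
  fsum d (fun i => c i ^ 2) <= INR d.
Proof.
  revert c; induction d; intros c H; simpl; [lra|].
  specialize (IHd (fun i => c (Fin.FS i)) (fun i => H _)).
  assert (c Fin.F1 ^ 2 <= 1).
  { pose proof (H Fin.F1). rewrite <- Rsqr_pow2, <- Rsqr_1. apply Rsqr_le_abs_1.
    rewrite Rabs_R1; auto. }
  destruct d; simpl in *; lra.
Qed.

Lemma fmax_ge_term d (f : Fin.t d -> R) i : f i <= fmax d f.
Proof.
  revert f; induction i as [n|n i IH]; intros f; simpl; [apply Rmax_l|].
  eapply Rle_trans; [apply (IH (fun j => f (Fin.FS j)))|apply Rmax_r].
Qed.

Lemma minkowski2 a b u v : 0 <= u -> 0 <= v ->
  sqrt ((a + b)^2 + (u + v)^2) <= sqrt (a^2 + u^2) + sqrt (b^2 + v^2).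
Proof.
  intros Hu Hv.
  assert (Ha : 0 <= a^2 + u^2) by nra. assert (Hb : 0 <= b^2 + v^2) by nra.
  assert (Hcs : a*b + u*v <= sqrt ((a^2+u^2)*(b^2+v^2))).
  { destruct (Rle_dec (a*b+u*v) 0).
    { pose proof (sqrt_pos ((a^2+u^2)*(b^2+v^2))). lra. }
    rewrite <- (sqrt_pow2 (a*b+u*v)) by lra. apply sqrt_le_1_alt.
    assert (E : (a^2+u^2)*(b^2+v^2) - (a*b+u*v)^2 = (a*v-u*b)^2) by ring.
    pose proof (pow2_ge_0 (a*v-u*b)). lra. }
  rewrite sqrt_mult in Hcs by auto.
  pose proof (sqrt_pos (a^2+u^2)); pose proof (sqrt_pos (b^2+v^2)).
  rewrite <- (sqrt_pow2 (sqrt (a^2+u^2) + sqrt (b^2+v^2))) by lra.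
  apply sqrt_le_1_alt.
  replace ((sqrt (a^2+u^2) + sqrt (b^2+v^2))^2) with
    ((a^2+u^2) + (b^2+v^2) + 2 * (sqrt (a^2+u^2) * sqrt (b^2+v^2)))
    by (ring_simplify; rewrite !pow2_sqrt by auto; ring).
  assert (E : (a+b)^2 + (u+v)^2 = a^2+u^2 + (b^2+v^2) + 2*(a*b+u*v)) by ring.
  lra.
Qed.

Lemma minkowski d (a b : Fin.t d -> R) :
  sqrt (fsum d (fun i => (a i + b i)^2)) <=
  sqrt (fsum d (fun i => a i ^ 2)) + sqrt (fsum d (fun i => b i ^ 2)).
Proof.
  revert a b; induction d; intros a b; cbn [fsum].
  - rewrite sqrt_0; lra.
  - set (A := fsum d (fun i => a (Fin.FS i) ^ 2)).
    set (B := fsum d (fun i => b (Fin.FS i) ^ 2)).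
    set (C := fsum d (fun i => (a (Fin.FS i) + b (Fin.FS i)) ^ 2)).
    specialize (IHd (fun i => a (Fin.FS i)) (fun i => b (Fin.FS i))).
    cbv beta in IHd. fold A B C in IHd.
    assert (HA : 0 <= A) by (apply fsum_nonneg; intros; apply pow2_ge_0).
    assert (HB : 0 <= B) by (apply fsum_nonneg; intros; apply pow2_ge_0).
    assert (HC : 0 <= C) by (apply fsum_nonneg; intros; apply pow2_ge_0).
    pose proof (sqrt_pos A); pose proof (sqrt_pos B); pose proof (sqrt_pos C).
    assert (C <= (sqrt A + sqrt B)^2).
    { rewrite <- (pow2_sqrt C) by auto. apply pow_incr. split; [auto|lra]. }
    pose proof (minkowski2 (a Fin.F1) (b Fin.F1) (sqrt A) (sqrt B) H H0) as Hm.
    rewrite !pow2_sqrt in Hm by auto.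
    assert (sqrt ((a Fin.F1 + b Fin.F1) ^ 2 + C) <=
            sqrt ((a Fin.F1 + b Fin.F1) ^ 2 + (sqrt A + sqrt B) ^ 2))
      by (apply sqrt_le_1_alt; lra).
    lra.
Qed.

Lemma dist_nonneg {d} (x y : Pt d) : 0 <= dist x y.
Proof. apply sqrt_pos. Qed.

Lemma dist_sym {d} (x y : Pt d) : dist x y = dist y x.
Proof. unfold dist, norm. f_equal. apply fsum_ext; intro; ring. Qed.

Lemma dist_refl {d} (x : Pt d) : dist x x = 0.
Proof.
  unfold dist, norm. rewrite (fsum_ext _ _ (fun _ => 0)) by (intro; ring).
  clear x. induction d; simpl; [apply sqrt_0|]. rewrite Rplus_0_l; auto.
Qed.

Lemma dist_triangle {d} (x y z : Pt d) : dist x z <= dist x y + dist y z.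
Proof.
  unfold dist, norm.
  pose proof (minkowski d (fun i => x i - y i) (fun i => y i - z i)) as H.
  rewrite (fsum_ext _ _ (fun i => (x i - z i)^2)) in H by (intro; f_equal; ring).
  exact H.
Qed.

Lemma coord_le_dist {d} (x y : Pt d) i : Rabs (x i - y i) <= dist x y.
Proof.
  unfold dist, norm. rewrite <- sqrt_Rsqr_abs. apply sqrt_le_1_alt.
  pose proof (fsum_ge_term d (fun i => (x i - y i)^2) i (fun j => pow2_ge_0 _)).
  rewrite Rsqr_pow2. exact H.
Qed.

Definition origin {d} : Pt d := fun _ => 0.

Lemma norm_dist_origin {d} (v : Pt d) : norm v = dist v origin.
Proof. unfold dist, norm, origin. f_equal. apply fsum_ext. intro; f_equal; ring. Qed.

(** * Compactness *)

(* [lmin f l] is the least positive value of [f] on [l]; non-positive values are ignored. *)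
Definition lmin {A} (f : A -> R) (l : list A) : R :=
  fold_right (fun a acc => Rmin acc (if Rlt_dec 0 (f a) then f a else 1)) 1 l.

Lemma lmin_pos {A} (f : A -> R) l : 0 < lmin f l.
Proof. induction l; simpl; [lra|]. destruct (Rlt_dec 0 (f a)); apply Rmin_glb_lt; lra. Qed.

Lemma lmin_le {A} (f : A -> R) l a : In a l -> 0 < f a -> lmin f l <= f a.
Proof.
  induction l; simpl; [tauto|]. intros [->|H] Hp.
  - destruct (Rlt_dec 0 (f a)); [apply Rmin_r|lra].
  - eapply Rle_trans; [apply Rmin_l|auto].
Qed.

Definition lmaxn {A} (f : A -> nat) (l : list A) : nat :=
  fold_right (fun a acc => Nat.max (f a) acc) 0%nat l.

Lemma lmaxn_ge {A} (f : A -> nat) l a : In a l -> (f a <= lmaxn f l)%nat.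
Proof. induction l; simpl; [tauto|]. intros [->|H]; [lia|]. specialize (IHl H); lia. Qed.

Definition cube d (R : R) : set d := fun x => forall i, Rabs (x i) <= R.
Definition ptail {d} (x : Pt (S d)) : Pt d := fun i => x (Fin.FS i).
Definition pcons {d} (a : R) (y : Pt d) : Pt (S d) :=
  fun i => Fin.caseS' i (fun _ => R) a y.

Lemma dist_S {d} (x y : Pt (S d)) :
  dist x y = sqrt ((x Fin.F1 - y Fin.F1)^2 + (dist (ptail x) (ptail y))^2).
Proof.
  unfold dist at 1, norm. cbn [fsum]. f_equal. f_equal. unfold dist, norm.
  rewrite pow2_sqrt; auto. apply fsum_nonneg; intros; apply pow2_ge_0.
Qed.

Lemma ball_is_open {d} (c : Pt d) r : is_open (fun x => dist x c < r).
Proof.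
  intros x Hx. exists (r - dist x c). split; [lra|].
  intros y Hy. pose proof (dist_triangle y x c). lra.
Qed.

(* A cover of the cube of dimension [S d] is refined, over each slab [|x_1 - a| < ra],
   by the finitely many open sets covering balls around the points of the slice [x_1 = a]. *)
Lemma cube_slab_cover d Rr (I : Type) (U : I -> set (S d)) :
  compact (cube d Rr) -> (forall i, is_open (U i)) ->
  (forall x, cube (S d) Rr x -> exists i, U i x) ->
  forall a, -Rr <= a <= Rr -> exists ra (l : list I), 0 < ra /\
    forall x : Pt (S d), Rabs (x Fin.F1 - a) < ra -> cube d Rr (ptail x) ->
      exists i, In i l /\ U i x.
Proof.
  intros Hcube HUo Hcov a Ha.
  set (W := fun (j : I * R * Pt d) (z : Pt d) =>
     let '(i, r, y) := j in
     (0 < r /\ forall x, dist x (pcons a y) < 2 * r -> U i x) /\ dist z y < r).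
  destruct (Hcube _ W) as [L HL].
  - intros [[i r] y] z [Hc Hzy].
    exists (r - dist z y). split; [lra|]. intros z' Hz'. simpl. split; auto.
    pose proof (dist_triangle z' z y). lra.
  - intros y Hy.
    assert (Hc : cube (S d) Rr (pcons a y)).
    { intro i. apply (Fin.caseS' i); simpl.
      - apply Rabs_le; lra.
      - intro p; apply Hy. }
    destruct (Hcov _ Hc) as [i Hi]. destruct (HUo i _ Hi) as [r0 [Hr0 Hb]].
    exists (i, r0/2, y). simpl. split; [split; [lra|]|].
    + intros x Hx. apply Hb. lra.
    + rewrite dist_refl; lra.
  - set (rad := fun j : I * R * Pt d => snd (fst j)).
    exists (lmin rad L), (map (fun j => fst (fst j)) L). split; [apply lmin_pos|].
    intros x Hx Htl. destruct (HL _ Htl) as [[[i r] y] [Hin Hw]].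
    destruct Hw as [[Hr Hu] Hd]. exists i. split.
    + exact (in_map (fun j : I * R * Pt d => fst (fst j)) L (i, r, y) Hin).
    + apply Hu. rewrite dist_S.
      assert (E1 : ptail (pcons (d:=d) a y) = y)
        by (apply functional_extensionality; intro; reflexivity).
      change ((pcons (d:=d) a y) Fin.F1) with a. rewrite E1.
      assert (Hle : lmin rad L <= r) by exact (lmin_le rad L _ Hin Hr).
      assert (Hsq : (x Fin.F1 - a) ^ 2 < r ^ 2).
      { rewrite <- !Rsqr_pow2. apply Rsqr_lt_abs_1. rewrite (Rabs_right r) by lra. lra. }
      assert (Hsq2 : dist (ptail x) y ^ 2 < r ^ 2).
      { pose proof (dist_nonneg (ptail x) y). simpl. nra. }
      rewrite <- (sqrt_pow2 (2*r)) by lra. apply sqrt_lt_1_alt.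
      pose proof (pow2_ge_0 (x Fin.F1 - a)); pose proof (pow2_ge_0 (dist (ptail x) y)).
      simpl in *; split; nra.
Qed.

Lemma compact_cube d Rr : compact (cube d Rr).
Proof.
  revert Rr; induction d as [|d IH]; intros Rr I U HUo Hcov.
  - set (z := (fun i => Fin.case0 (fun _ => R) i) : Pt 0).
    destruct (Hcov z (fun i => Fin.case0 (fun i => Rabs (z i) <= Rr) i)) as [i Hi].
    exists (i :: nil). intros x _. exists i. split; [left; auto|].
    destruct (HUo i z Hi) as [r [Hr Hb]]. apply Hb.
    unfold dist, norm; simpl. rewrite sqrt_0. auto.
  - destruct (choice (fun (a : R) (p : R * list I) => -Rr <= a <= Rr -> 0 < fst p /\
       forall x : Pt (S d), Rabs (x Fin.F1 - a) < fst p -> cube d Rr (ptail x) ->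
       exists i, In i (snd p) /\ U i x)) as [g Hg].
    { intro a. destruct (classic (-Rr <= a <= Rr)) as [Ha|Ha].
      - destruct (cube_slab_cover d Rr I U (IH Rr) HUo Hcov a Ha) as [ra [l [H1 H2]]].
        exists (ra, l); auto.
      - exists (1, nil); tauto. }
    set (fam := fun a z => (-Rr <= a <= Rr) /\ Rabs (z - a) < fst (g a)).
    assert (Hcf : forall x, (exists y, fam x y) -> (fun a => exists z, fam a z) x) by auto.
    destruct (compact_P3 (-Rr) Rr (mkfamily _ fam Hcf)) as [D [Hcov2 [l Hl]]].
    + split.
      * intros z Hz. exists z. simpl. unfold fam. split; auto.
        rewrite Rminus_diag, Rabs_R0. apply (Hg z Hz).
      * intros a z [Ha Hz].
        assert (Hp : 0 < fst (g a) - Rabs (z - a)) by lra.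
        exists (mkposreal _ Hp). intros w Hw. unfold disc in Hw; simpl in Hw.
        split; auto. pose proof (Rabs_triang (w - z) (z - a)).
        replace (w - z + (z - a)) with (w - a) in H by ring. lra.
    + exists (flat_map (fun a => snd (g a)) l).
      intros x Hx.
      assert (Hz : -Rr <= x Fin.F1 <= Rr).
      { pose proof (Hx Fin.F1). pose proof (Rle_abs (x Fin.F1)).
        pose proof (Rle_abs (- x Fin.F1)). rewrite Rabs_Ropp in *. lra. }
      destruct (Hcov2 _ Hz) as [a [[Ha1 Ha2] HD]].
      assert (Hinl : In a l).
      { apply Hl. simpl. split; auto. exists (x Fin.F1). unfold fam; auto. }
      destruct (proj2 (Hg a Ha1) x Ha2) as [i [Hi1 Hi2]]; [intro j; apply Hx|].
      exists i. split; auto. apply in_flat_map. eauto.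
Qed.

Lemma closed_dist_pos {d} (C : set d) x : is_closed C -> ~ C x ->
  exists e, 0 < e /\ forall y, C y -> e <= dist x y.
Proof.
  intros Hc Hx. apply NNPP; intro Hn. apply Hx, Hc. intros e He.
  apply NNPP; intro H2. apply Hn. exists e; split; auto. intros y Hy.
  destruct (Rle_dec e (dist x y)); auto. exfalso; apply H2; exists y; split; auto; lra.
Qed.

Lemma compact_closed_subset {d} (K C : set d) : compact K -> is_closed C ->
  (forall x, C x -> K x) -> compact C.
Proof.
  intros HK Hc Hsub I U HUo Hcov.
  set (U' := fun (o : option I) => match o with Some i => U i | None => fun x => ~ C x end).
  destruct (HK _ U') as [l Hl].
  - intros [i|]; simpl; auto. intros x Hx. destruct (closed_dist_pos C x Hc Hx) as [e [He H]].
    exists e; split; auto. intros y Hy HC. specialize (H y HC). rewrite dist_sym in H. lra.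
  - intros x Hx. destruct (classic (C x)) as [HC|HC].
    + destruct (Hcov x HC) as [i Hi]. exists (Some i); auto.
    + exists None; auto.
  - exists (flat_map (fun o => match o with Some i => i :: nil | None => nil end) l).
    intros x Hx. destruct (Hl x (Hsub x Hx)) as [[i|] [Hin Hi]].
    + exists i; split; auto. apply in_flat_map. exists (Some i); simpl; auto.
    + simpl in Hi; contradiction.
Qed.

Lemma closed_bounded_compact {d} (C : set d) (c0 : Pt d) Rb : is_closed C ->
  (forall x, C x -> dist x c0 <= Rb) -> compact C.
Proof.
  intros Hc Hb. apply (compact_closed_subset (cube d (Rb + fsum d (fun i => Rabs (c0 i))))); auto.
  - apply compact_cube.
  - intros x Hx i. pose proof (Hb x Hx). pose proof (coord_le_dist x c0 i).
    pose proof (fsum_ge_term d (fun i => Rabs (c0 i)) i (fun j => Rabs_pos _)).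
    pose proof (Rabs_triang (x i - c0 i) (c0 i)).
    replace (x i - c0 i + c0 i) with (x i) in H2 by ring.
    simpl in *. lra.
Qed.

Lemma compact_cluster_point {d} (K : set d) (s : nat -> Pt d) :
  compact K -> (forall n, K (s n)) ->
  exists w, K w /\ forall r, 0 < r -> forall N, exists n, (N <= n)%nat /\ dist (s n) w < r.
Proof.
  intros HK Hs. apply NNPP; intro Hn.
  assert (H1 : forall w, exists p : R * nat, K w ->
    0 < fst p /\ forall n, (snd p <= n)%nat -> fst p <= dist (s n) w).
  { intro w. destruct (classic (K w)) as [Hw|Hw]; [|exists (1, 0%nat); tauto].
    apply NNPP; intro H2. apply Hn. exists w. split; auto. intros r Hr N.
    apply NNPP; intro H3. apply H2. exists (r, N). intros _. split; auto. intros n Hnn.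
    simpl in *. destruct (Rle_dec r (dist (s n) w)); auto.
    exfalso; apply H3; exists n; split; auto; lra. }
  destruct (choice _ H1) as [g Hg].
  destruct (HK _ (fun w x => K w /\ dist x w < fst (g w))) as [l Hl].
  - intros w x [Kw Hx]. destruct (ball_is_open w (fst (g w)) x Hx) as [e [He Hb]].
    exists e; split; auto.
  - intros x Hx. exists x. split; auto. rewrite dist_refl. apply (Hg x Hx).
  - set (N := lmaxn (fun w => snd (g w)) l).
    destruct (Hl (s N) (Hs N)) as [w [Hin [Kw Hd]]].
    pose proof (proj2 (Hg w Kw) N (lmaxn_ge (fun w => snd (g w)) l w Hin)). lra.
Qed.

Lemma compact_closed_dist_pos {d} (K C : set d) : compact K -> is_closed C ->
  (forall x, K x -> ~ C x) -> exists r, 0 < r /\ forall x y, K x -> C y -> r <= dist x y.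
Proof.
  intros HK Hc Hdis.
  assert (H1 : forall w, exists e, K w -> 0 < e /\ forall y, C y -> e <= dist w y).
  { intro w. destruct (classic (K w)) as [Hw|Hw]; [|exists 1; tauto].
    destruct (closed_dist_pos C w Hc (Hdis w Hw)) as [e [He H]]. exists e; auto. }
  destruct (choice _ H1) as [g Hg].
  destruct (HK _ (fun w x => K w /\ dist x w < g w / 2)) as [l Hl].
  - intros w x [Kw Hx]. destruct (ball_is_open w (g w / 2) x Hx) as [e [He Hb]].
    exists e; split; auto.
  - intros x Hx. exists x. split; auto. rewrite dist_refl. pose proof (proj1 (Hg x Hx)); lra.
  - exists (lmin (fun w => g w / 2) l). split; [apply lmin_pos|].
    intros x y Hx Hy. destruct (Hl x Hx) as [w [Hin [Kw Hd]]].
    destruct (Hg w Kw) as [Hp Hfar]. specialize (Hfar y Hy).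
    pose proof (lmin_le (fun w => g w / 2) l w Hin ltac:(simpl; lra)). simpl in H.
    pose proof (dist_triangle w x y). rewrite dist_sym in Hd. lra.
Qed.

Lemma rclosed_is_closed {d} (M C : set d) : is_closed M -> rclosed M C -> is_closed C.
Proof.
  intros HM [Hs Hc] x Hx. apply Hc; auto. apply HM. intros e He.
  destruct (Hx e He) as [y [Hy Hd]]. exists y; split; auto.
Qed.

(** * Integrals against a probability *)

Section Integral.
Context {d : nat} (M : set d).

Lemma borel_sub A : borel M A -> forall x, A x -> M x.
Proof.
  induction 1; intros x Hx.
  - apply H; auto.
  - apply Hx.
  - destruct Hx as [n Hn]. eauto.
  - apply IHborel, H0; auto.
Qed.

Lemma borel_M : borel M M.
Proof. apply borel_open. split; auto. intros x Hx. exists 1; split; auto; lra. Qed.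

Lemma borel_empty : borel M (fun _ => False).
Proof. eapply borel_ext; [apply borel_compl, borel_M|]. intro x; simpl; tauto. Qed.

Lemma borel_inter A B : borel M A -> borel M B -> borel M (fun x => A x /\ B x).
Proof.
  intros HA HB.
  set (S := fun n : nat => match n with
                          | O => fun x => M x /\ ~ A x
                          | _ => fun x => M x /\ ~ B x end).
  eapply borel_ext; [apply borel_compl, (borel_union _ S)|].
  - intros [|n]; simpl; apply borel_compl; auto.
  - intro x. split.
    + intros [Hm Hn]. split; apply NNPP; intro H; apply Hn.
      * exists O; simpl; auto.
      * exists 1%nat; simpl; auto.
    + intros [Ha Hb]. split; [eapply borel_sub; eauto|]. intros [[|n] Hn]; simpl in Hn; tauto.
Qed.

Lemma borel_diff A B : borel M A -> borel M B -> borel M (fun x => A x /\ ~ B x).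
Proof.
  intros HA HB. eapply borel_ext.
  { apply (borel_inter A (fun x => M x /\ ~ B x)); [exact HA|apply borel_compl; exact HB]. }
  intro x; split; [tauto|]. intros [Ha Hb]; split; auto. split; auto. exact (borel_sub A HA x Ha).
Qed.

Variable mu : set d -> R.
Hypothesis Hmu : is_prob M mu.

Lemma mu_empty : mu (fun _ => False) = 0.
Proof.
  destruct Hmu as [_ [_ Hadd]].
  specialize (Hadd (fun _ => fun _ => False) (fun _ => borel_empty) (fun _ _ _ _ H _ => H)).
  replace (fun x : Pt d => exists _ : nat, False) with (fun _ : Pt d => False) in Hadd
    by (apply set_ext; intro x; split; [tauto|intros [_ H]; auto]).
  set (c := mu (fun _ => False)) in *.
  (* the partial sums [(n + 1) c] of the constant series converge only if [c = 0] *)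
  assert (Hs : forall n, sum_f_R0 (fun _ => c) n = INR (S n) * c).
  { induction n; simpl; [ring|]. rewrite IHn. rewrite S_INR. simpl. destruct n; simpl; ring. }
  apply NNPP; intro Hc0. pose proof (Rabs_pos_lt c Hc0) as Hc.
  destruct (Hadd (Rabs c / 2) ltac:(lra)) as [N HN].
  pose proof (HN (S N) ltac:(lia)) as H1. pose proof (HN N ltac:(lia)) as H2.
  unfold Rdist in *. rewrite Hs in *.
  rewrite S_INR in H1.
  set (e := mu (fun _ : Pt d => exists _ : nat, False)) in *.
  pose proof (Rabs_triang ((INR (S N) + 1) * c - e) (- (INR (S N) * c - e))).
  replace ((INR (S N) + 1) * c - e + - (INR (S N) * c - e)) with c in H by ring.
  rewrite Rabs_Ropp in H. lra.
Qed.

Lemma mu_nonneg A : borel M A -> 0 <= mu A.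
Proof. intro; apply Hmu; auto. Qed.

Lemma mu_add A B : borel M A -> borel M B ->
  mu B = mu (fun x => B x /\ A x) + mu (fun x => B x /\ ~ A x).
Proof.
  intros HA HB. destruct Hmu as [_ [_ Hadd]].
  set (S := fun n : nat => match n with O => fun x => B x /\ A x
                         | 1%nat => fun x => B x /\ ~ A x | _ => fun _ => False end).
  assert (HSb : forall n, borel M (S n)).
  { intros [|[|n]]; simpl; [apply borel_inter|apply borel_diff|apply borel_empty]; auto. }
  assert (HSd : forall n m x, n <> m -> S n x -> S m x -> False).
  { intros [|[|n]] [|[|m]] x Hnm; simpl; try tauto; lia. }
  specialize (Hadd S HSb HSd).
  replace (fun x => exists n, S n x) with B in Hadd.
  2:{ apply set_ext; intro x; split.
      - intro Hx. destruct (classic (A x)); [exists O|exists 1%nat]; simpl; auto.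
      - intros [[|[|n]] Hn]; simpl in Hn; tauto. }
  apply (uniqueness_sum (fun n => mu (S n))); auto.
  intros e He. exists 1%nat. intros n Hn. unfold Rdist.
  replace (sum_f_R0 (fun n0 : nat => mu (S n0)) n) with
     (mu (fun x => B x /\ A x) + mu (fun x => B x /\ ~ A x)).
  { rewrite Rminus_diag, Rabs_R0; auto. }
  induction n; [lia|]. destruct n; [simpl; auto|].
  rewrite tech5. rewrite <- IHn by lia. simpl. rewrite mu_empty. ring.
Qed.

Lemma mu_le1 A : borel M A -> mu A <= 1.
Proof.
  intro HA. pose proof (mu_add A M HA borel_M).
  replace (fun x => M x /\ A x) with A in H.
  2:{ apply set_ext; intro x; split; [intro; split; auto; eapply borel_sub; eauto|tauto]. }
  pose proof (mu_nonneg _ (borel_diff _ _ borel_M HA)). destruct Hmu as [H1 _]. lra.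
Qed.

Lemma ind_true (P : Prop) : P -> ind P = 1.
Proof. intro; unfold ind; destruct (excluded_middle_informative P); tauto. Qed.
Lemma ind_false (P : Prop) : ~ P -> ind P = 0.
Proof. intro; unfold ind; destruct (excluded_middle_informative P); tauto. Qed.
Lemma ind_bounds (P : Prop) : 0 <= ind P <= 1.
Proof. unfold ind; destruct (excluded_middle_informative P); lra. Qed.

Definition simple_valid (l : list (R * set d)) :=
  Forall (fun cA => 0 <= fst cA /\ borel M (snd cA)) l.

Fixpoint smeas_on (l : list (R * set d)) (B : set d) : R :=
  match l with nil => 0 | (c, A) :: l' => c * mu (fun x => A x /\ B x) + smeas_on l' B end.

Lemma smeas_on_split l A B : simple_valid l -> borel M A -> borel M B ->
  smeas_on l B = smeas_on l (fun x => B x /\ A x) + smeas_on l (fun x => B x /\ ~ A x).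
Proof.
  induction l as [|[c C] l IH]; intros Hv HA HB; simpl; [ring|].
  inversion Hv; subst. simpl in H1. destruct H1 as [Hc HC].
  rewrite IH by auto.
  rewrite (mu_add A (fun x => C x /\ B x)) by (auto; apply borel_inter; auto).
  replace (fun x => (C x /\ B x) /\ A x) with (fun x => C x /\ B x /\ A x)
    by (apply set_ext; intro; tauto).
  replace (fun x => (C x /\ B x) /\ ~ A x) with (fun x => C x /\ B x /\ ~ A x)
    by (apply set_ext; intro; tauto).
  ring.
Qed.

Lemma smeas_on_le l : simple_valid l -> forall B t, borel M B -> (forall x, B x -> sfun l x <= t) ->
  smeas_on l B <= t * mu B.
Proof.
  induction l as [|[c A] l IH]; intros Hv B t HB Hle; simpl.
  - destruct (classic (exists x, B x)) as [[x Hx]|Hn].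
    + specialize (Hle x Hx); simpl in Hle. pose proof (mu_nonneg B HB). nra.
    + replace B with (fun _ : Pt d => False)
        by (apply set_ext; intro x; split; [tauto|intro; apply Hn; eauto]).
      rewrite mu_empty; lra.
  - inversion Hv; subst. simpl in H1. destruct H1 as [Hc HA].
    rewrite (smeas_on_split l A B) by auto.
    assert (Hq1 : smeas_on l (fun x => B x /\ A x) <= (t - c) * mu (fun x => B x /\ A x)).
    { apply IH; auto. apply borel_inter; auto. intros x [Hb Ha]. specialize (Hle x Hb).
      simpl in Hle. rewrite ind_true in Hle by auto. lra. }
    assert (Hq2 : smeas_on l (fun x => B x /\ ~ A x) <= t * mu (fun x => B x /\ ~ A x)).
    { apply IH; auto. apply borel_diff; auto. intros x [Hb Ha]. specialize (Hle x Hb).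
      simpl in Hle. rewrite ind_false in Hle by auto. lra. }
    rewrite (mu_add A B HA HB).
    replace (fun x => A x /\ B x) with (fun x => B x /\ A x) by (apply set_ext; intro; tauto).
    nra.
Qed.

Lemma smeas_as_smeas_on l : simple_valid l -> smeas mu l = smeas_on l M.
Proof.
  induction l as [|[c A] l IH]; intro Hv; simpl; auto.
  inversion Hv; subst. simpl in H1. destruct H1 as [Hc HA].
  rewrite IH by auto. f_equal. f_equal. f_equal.
  apply set_ext; intro x; split; [intro; split; auto; eapply borel_sub; eauto|tauto].
Qed.

Lemma smeas_le l t : simple_valid l -> (forall x, M x -> sfun l x <= t) -> smeas mu l <= t.
Proof.
  intros Hv H. rewrite smeas_as_smeas_on by auto. pose proof (smeas_on_le l Hv M t borel_M H).
  destruct Hmu as [H1 _]. rewrite H1 in H0. lra.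
Qed.

Definition simple_below (f : Pt d -> R) := fun v => exists l : list (R * set d),
         simple_valid l /\
         (forall x, M x -> sfun l x <= f x) /\ v = smeas mu l.

Lemma sup_is_lub (S : R -> Prop) : (exists x, S x) -> bound S -> is_lub S (sup S).
Proof.
  intros He Hb. unfold sup. apply epsilon_spec.
  destruct (completeness S Hb He) as [m Hm]. eauto.
Qed.

Lemma simple_below_0 f : (forall x, M x -> 0 <= f x) -> simple_below f 0.
Proof. intro H. exists nil. split; [constructor|]. split; auto. Qed.

Lemma integral_le f T : (forall x, M x -> 0 <= f x) -> (forall v, simple_below f v -> v <= T) ->
  integral M mu f <= T.
Proof.
  intros H0 HT. unfold integral. fold (simple_below f).
  assert (Hl := sup_is_lub (simple_below f) (ex_intro _ 0 (simple_below_0 f H0)) (ex_intro _ T HT)).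
  apply Hl. exact HT.
Qed.

Lemma integral_ge f T v : (forall v, simple_below f v -> v <= T) -> simple_below f v ->
  v <= integral M mu f.
Proof.
  intros HT Hv. unfold integral. fold (simple_below f).
  assert (Hl := sup_is_lub (simple_below f) (ex_intro _ v Hv) (ex_intro _ T HT)).
  apply Hl. exact Hv.
Qed.

Lemma simple_below_le1 f : (forall x, M x -> f x <= 1) -> forall v, simple_below f v -> v <= 1.
Proof.
  intros H v [l [Hv [Hle ->]]]. apply smeas_le; auto.
  intros x Hx. specialize (Hle x Hx). specialize (H x Hx). lra.
Qed.

Lemma integral_nonneg f : (forall x, M x -> 0 <= f x) -> (forall x, M x -> f x <= 1) ->
  0 <= integral M mu f.
Proof.
  intros H0 H1. apply (integral_ge f 1); [apply simple_below_le1|apply simple_below_0]; auto.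
Qed.

Lemma integral_le1 f : (forall x, M x -> 0 <= f x) -> (forall x, M x -> f x <= 1) ->
  integral M mu f <= 1.
Proof. intros H0 H1. apply integral_le; auto. apply simple_below_le1; auto. Qed.

Lemma integral_le_1_minus f a U : (forall x, M x -> 0 <= f x) -> 0 <= a -> borel M U ->
  (forall x, M x -> f x <= 1 - a * ind (U x)) -> integral M mu f <= 1 - a * mu U.
Proof.
  intros H0 Ha HU H1. apply integral_le; auto.
  intros v [l [Hv [Hle ->]]].
  assert (Hv' : simple_valid ((a, U) :: l)) by (constructor; auto).
  pose proof (smeas_le ((a, U) :: l) 1 Hv') as H. simpl in H.
  replace (fun x => M x /\ U x) with U in * by
    (apply set_ext; intro x; split; [intro; split; auto; eapply borel_sub; eauto|tauto]).
  assert (a * mu U + smeas mu l <= 1); [|lra].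
  apply H. intros x Hx. specialize (Hle x Hx). specialize (H1 x Hx). lra.
Qed.

Fixpoint lscale (k : R) (l : list (R * set d)) : list (R * set d) :=
  match l with nil => nil | (c, A) :: l' => (k * c, A) :: lscale k l' end.
Lemma sfun_scale k l x : sfun (lscale k l) x = k * sfun l x.
Proof. induction l as [|[c A] l IH]; simpl; [ring|]. rewrite IH; ring. Qed.
Lemma smeas_scale k l : smeas mu (lscale k l) = k * smeas mu l.
Proof. induction l as [|[c A] l IH]; simpl; [ring|]. rewrite IH; ring. Qed.
Lemma valid_scale k l : 0 <= k -> simple_valid l -> simple_valid (lscale k l).
Proof. intros Hk; induction 1 as [|[c A] l [Hc HA] Hl IH]; simpl; constructor; auto.
  simpl. split; auto. apply Rmult_le_pos; auto. Qed.

Lemma integral_le_scale f g c : 0 <= c -> (forall x, M x -> 0 <= f x) ->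
  (forall x, M x -> 0 <= g x <= 1) -> (forall x, M x -> f x <= c * g x) ->
  integral M mu f <= c * integral M mu g.
Proof.
  intros Hc Hf Hg Hfg. apply integral_le; auto.
  intros v [l [Hv [Hle ->]]].
  destruct (Req_dec c 0) as [->|Hc0].
  - rewrite Rmult_0_l. apply smeas_le; auto.
    intros x Hx. specialize (Hle x Hx). specialize (Hfg x Hx). lra.
  - assert (Hs : simple_below g (smeas mu (lscale (/ c) l))).
    { exists (lscale (/ c) l). split; [apply valid_scale; auto; left; apply Rinv_0_lt_compat; lra|].
      split; auto. intros x Hx. rewrite sfun_scale. specialize (Hle x Hx). specialize (Hfg x Hx).
      apply (Rmult_le_reg_l c); [lra|]. rewrite <- Rmult_assoc, Rinv_r, Rmult_1_l by auto. lra. }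
    pose proof (integral_ge g 1 _ (simple_below_le1 g (fun x Hx => proj2 (Hg x Hx))) Hs).
    rewrite smeas_scale in H.
    apply (Rmult_le_compat_l c) in H; [|lra].
    rewrite <- Rmult_assoc, Rinv_r, Rmult_1_l in H by auto. lra.
Qed.
End Integral.

(** * Survival probabilities *)

Lemma exp_le_exp a b : a <= b -> exp a <= exp b.
Proof.
  intro H. destruct (Rle_lt_or_eq_dec a b H) as [H1|H1];
    [left; apply exp_increasing; auto|subst; lra].
Qed.

Lemma pow_exp k x : exp x ^ k = exp (INR k * x).
Proof.
  induction k; simpl; [rewrite Rmult_0_l, exp_0; auto|].
  rewrite IHk, <- exp_plus. f_equal. destruct k; simpl; ring.
Qed.

Lemma one_minus_pow_le_exp q k : 0 <= q <= 1 -> (1 - q) ^ k <= exp (- (INR k * q)).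
Proof.
  intro Hq. replace (- (INR k * q)) with (INR k * - q) by ring. rewrite <- pow_exp.
  apply pow_incr. split; [lra|]. pose proof (exp_ineq1_le (- q)). lra.
Qed.

Section Survival.
Context {d : nat} (M V : set d) (p : Pt d -> set d -> R).
Hypothesis Hp : forall x, M x -> is_prob M (p x).
Hypothesis HV : forall x, V x -> M x.

Lemma surv_outside n x : ~ V x -> surv M p V n x = 0.
Proof. intro H; destruct n; simpl; rewrite ind_false by auto; ring. Qed.

Lemma surv_bounds n x : 0 <= surv M p V n x <= 1.
Proof.
  revert x; induction n; intro x; simpl; [apply ind_bounds|].
  destruct (classic (V x)) as [Hx|Hx].
  - rewrite ind_true by auto. rewrite Rmult_1_l.
    split; [apply integral_nonneg|apply integral_le1]; auto; intros; apply IHn.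
  - rewrite ind_false by auto. lra.
Qed.

(* Markov property: surviving [n + m] steps means surviving [n] steps and then [m] more. *)
Lemma surv_add_le m c : 0 <= c -> (forall y, surv M p V m y <= c) ->
  forall n x, surv M p V (n + m) x <= c * surv M p V n x.
Proof.
  intros Hc Hm n. induction n; intro x; simpl.
  - destruct (classic (V x)) as [Hx|Hx].
    + rewrite ind_true by auto. rewrite Rmult_1_r; auto.
    + rewrite surv_outside, ind_false by auto. lra.
  - destruct (classic (V x)) as [Hx|Hx].
    + rewrite !ind_true by auto. rewrite !Rmult_1_l.
      apply integral_le_scale; auto; intros; try apply surv_bounds.
    + rewrite !ind_false by auto. lra.
Qed.

Lemma surv_antitone n m x : surv M p V (n + m) x <= surv M p V n x.
Proof.
  pose proof (surv_add_le m 1 ltac:(lra) (fun y => proj2 (surv_bounds m y)) n x). lra.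
Qed.

Lemma surv_S_le n x U a : M x -> borel M U -> 0 <= a <= 1 ->
  (forall y, M y -> U y -> surv M p V n y <= 1 - a) ->
  surv M p V (S n) x <= 1 - a * p x U.
Proof.
  intros Hx HU Ha H. simpl.
  assert (Hi : integral M (p x) (surv M p V n) <= 1 - a * p x U).
  { apply integral_le_1_minus; [apply Hp; auto|intros; apply surv_bounds|lra|auto|].
    intros y Hy. destruct (classic (U y)) as [Hu|Hu].
    - rewrite ind_true by auto. specialize (H y Hy Hu). lra.
    - rewrite ind_false by auto. pose proof (surv_bounds n y). lra. }
  pose proof (mu_le1 M (p x) (Hp x Hx) U HU).
  pose proof (mu_nonneg M (p x) (Hp x Hx) U HU).
  pose proof (ind_bounds (V x)).
  assert (0 <= integral M (p x) (surv M p V n))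
    by (apply integral_nonneg; auto; intros; apply surv_bounds).
  assert (0 <= 1 - a * p x U) by nra.
  destruct (classic (V x)) as [Hv|Hv].
  - rewrite ind_true by auto. lra.
  - rewrite ind_false by auto. lra.
Qed.

Lemma surv_geometric N q : (1 <= N)%nat -> 0 <= q <= 1 ->
  (forall y, surv M p V N y <= 1 - q) ->
  forall n x, surv M p V n x <= exp (- (((INR n + 1) / INR N - 1) * q)).
Proof.
  intros HN Hq HNq n x.
  assert (HN0 : 1 <= INR N) by (apply (le_INR 1); auto).
  set (k := (n / N)%nat). set (r := (n mod N)%nat).
  assert (Hnkr : n = (r + k * N)%nat).
  { pose proof (Nat.div_mod n N ltac:(lia)). unfold k, r. lia. }
  assert (Hblocks : forall k r x, surv M p V (r + k * N) x <= (1 - q) ^ k).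
  { clear k r Hnkr x. induction k as [|k IH]; intros r x; simpl.
    - rewrite Nat.add_0_r. apply surv_bounds.
    - replace (r + (N + k * N))%nat with ((r + k * N) + N)%nat by lia.
      pose proof (surv_add_le N (1 - q) ltac:(lra) HNq (r + k * N) x).
      pose proof (Rmult_le_compat_l (1 - q) _ _ ltac:(lra) (IH r x)). lra. }
  assert (Hk : (INR n + 1) / INR N - 1 <= INR k).
  { assert (Hr : (r + 1 <= N)%nat) by (pose proof (Nat.mod_upper_bound n N); unfold r; lia).
    apply le_INR in Hr. rewrite plus_INR in Hr.
    assert (Hn : INR n = INR r + INR k * INR N) by (rewrite Hnkr, plus_INR, mult_INR; auto).
    apply (Rmult_le_reg_r (INR N)); [lra|]. unfold Rdiv.
    rewrite Rmult_minus_distr_r, Rmult_assoc, Rinv_l, Rmult_1_r by lra. simpl in Hr. lra. }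
  rewrite Hnkr at 1. eapply Rle_trans; [apply Hblocks|].
  eapply Rle_trans; [apply one_minus_pow_le_exp; auto|].
  apply exp_le_exp. apply Ropp_le_contravar, Rmult_le_compat_r; lra.
Qed.
End Survival.

(** * Chains of small cost *)

Section Chains.
Context {d : nat} (M : set d) (rho : Pt d -> Pt d -> ER).
Hypothesis Hrho0 : forall x y, ele (EFin 0) (rho x y).

Definition cheap_chain (del : R) (x y : Pt d) : Prop :=
  exists n xi, (1 <= n)%nat /\ (forall i, (i <= n)%nat -> M (xi i)) /\
    xi O = x /\ xi n = y /\ exists s, Acost rho n xi = EFin s /\ s < del.

Lemma Acost_nonneg n xi : ele (EFin 0) (Acost rho n xi).
Proof. apply esum_nonneg; intro; apply Hrho0. Qed.

Lemma chain_costs_nonneg x y : nonneg_set (fun a => exists (n : nat) (xi : nat -> Pt d),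
          (1 <= n)%nat /\ (forall i, (i <= n)%nat -> M (xi i)) /\
          xi O = x /\ xi n = y /\ a = Acost rho n xi).
Proof. intros a (n & xi & _ & _ & _ & _ & ->). apply Acost_nonneg. Qed.

Lemma rlt_cheap_chain x y : rlt M rho x y -> forall del, 0 < del -> cheap_chain del x y.
Proof.
  unfold rlt, Brho. intros H del Hd. apply NNPP; intro Hn.
  assert (ele (EFin del) (EFin 0)); [|simpl in *; lra].
  rewrite <- H. apply einf_ge; [apply chain_costs_nonneg|].
  intros a (n & xi & H1 & H2 & H3 & H4 & ->).
  destruct (Acost rho n xi) eqn:E; simpl; auto.
  destruct (Rle_dec del r); auto. exfalso; apply Hn. exists n, xi. repeat split; auto.
  exists r; split; auto; lra.
Qed.

Lemma cheap_chain_rlt x y : (forall del, 0 < del -> cheap_chain del x y) -> rlt M rho x y.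
Proof.
  intro H. unfold rlt, Brho. apply ele_antisym.
  - destruct (H 1 ltac:(lra)) as (n & xi & H1 & H2 & H3 & H4 & s & Hs & Hs1).
    assert (He : ele (einf (fun a => exists (n : nat) (xi : nat -> Pt d),
          (1 <= n)%nat /\ (forall i, (i <= n)%nat -> M (xi i)) /\
          xi O = x /\ xi n = y /\ a = Acost rho n xi)) (EFin s)).
    { apply einf_le; [apply chain_costs_nonneg|]. exists n, xi; repeat split; auto. }
    destruct (einf _) as [e|] eqn:Ee; [|simpl in He; contradiction].
    simpl. apply Rnot_lt_le; intro Hlt.
    destruct (H e Hlt) as (n' & xi' & H1' & H2' & H3' & H4' & s' & Hs' & Hs1').
    assert (He' : ele (EFin e) (EFin s')).
    { rewrite <- Ee. apply einf_le; [apply chain_costs_nonneg|].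
      exists n', xi'; repeat split; auto. }
    simpl in He'. lra.
  - apply einf_ge; [apply chain_costs_nonneg|].
    intros a (n & xi & _ & _ & _ & _ & ->). apply Acost_nonneg.
Qed.

Lemma Acost_S n xi :
  Acost rho (S n) xi = eadd (rho (xi O) (xi 1%nat)) (Acost rho n (fun i => xi (S i))).
Proof.
  unfold Acost. revert xi. induction n; intro xi; simpl.
  - destruct (rho (xi O) (xi 1%nat)); simpl; auto. f_equal; ring.
  - simpl in IHn. rewrite IHn.
    destruct (rho (xi O) _), (esum n _), (rho (xi (S n)) _); simpl; auto. f_equal; ring.
Qed.

Definition concat_chain (n1 : nat) (xi1 xi2 : nat -> Pt d) : nat -> Pt d :=
  fun i => if Nat.leb i n1 then xi1 i else xi2 (i - n1)%nat.

Lemma cheap_chain_trans d1 d2 x y z :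
  cheap_chain d1 x y -> cheap_chain d2 y z -> cheap_chain (d1 + d2) x z.
Proof.
  intros (n1 & xi1 & Ha1 & Ha2 & Ha3 & Ha4 & s1 & Hs1 & Hs1')
         (n2 & xi2 & Hb1 & Hb2 & Hb3 & Hb4 & s2 & Hs2 & Hs2').
  set (xi := concat_chain n1 xi1 xi2).
  exists (n1 + n2)%nat, xi. repeat split.
  - lia.
  - intros i Hi. unfold xi, concat_chain. destruct (Nat.leb i n1) eqn:E.
    + apply Ha2. apply Nat.leb_le; auto.
    + apply Hb2. lia.
  - unfold xi, concat_chain; simpl; auto.
  - unfold xi, concat_chain. destruct (Nat.leb (n1 + n2) n1) eqn:E.
    + apply Nat.leb_le in E. assert (n2 = O) by lia. lia.
    + replace (n1 + n2 - n1)%nat with n2 by lia; auto.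
  - exists (s1 + s2). split; [|lra].
    unfold Acost. rewrite esum_add.
    rewrite (esum_ext n1 _ (fun i => rho (xi1 i) (xi1 (S i)))).
    2:{ intros i Hi. unfold xi, concat_chain.
        replace (Nat.leb i n1) with true by (symmetry; apply Nat.leb_le; lia).
        replace (Nat.leb (S i) n1) with true by (symmetry; apply Nat.leb_le; lia). auto. }
    rewrite (esum_ext n2 _ (fun i => rho (xi2 i) (xi2 (S i)))).
    2:{ intros i Hi. unfold xi, concat_chain.
        replace (Nat.leb (S (n1 + i)) n1) with false by (symmetry; apply Nat.leb_gt; lia).
        replace (S (n1 + i) - n1)%nat with (S i) by lia.
        destruct (Nat.leb (n1 + i) n1) eqn:E.
        - apply Nat.leb_le in E. assert (i = O) by lia. subst i. rewrite Nat.add_0_r.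
          rewrite Ha4, <- Hb3. auto.
        - replace (n1 + i - n1)%nat with i by lia. auto. }
    unfold Acost in Hs1, Hs2. rewrite Hs1, Hs2. auto.
Qed.

Lemma cheap_chain_step x y r del : M x -> M y -> rho x y = EFin r -> r < del -> cheap_chain del x y.
Proof.
  intros Hx Hy Hr Hd. exists 1%nat, (fun i => match i with O => x | _ => y end).
  repeat split; auto. intros [|i] _; auto. exists r. split; auto.
  unfold Acost; simpl. rewrite Hr; simpl. f_equal; ring.
Qed.

Lemma rlt_trans x y z : rlt M rho x y -> rlt M rho y z -> rlt M rho x z.
Proof.
  intros H1 H2. apply cheap_chain_rlt. intros del Hd.
  replace del with (del/2 + del/2) by field.
  apply cheap_chain_trans with y; apply rlt_cheap_chain; auto; lra.
Qed.

Lemma rsim_trans x y z : rsim M rho x y -> rsim M rho y z -> rsim M rho x z.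
Proof. intros [H1 H2] [H3 H4]; split; eapply rlt_trans; eauto. Qed.
Lemma rsim_sym x y : rsim M rho x y -> rsim M rho y x.
Proof. intros [H1 H2]; split; auto. Qed.

Lemma basic_class_rsim K x y : basic_class M rho K -> K x -> K y -> rsim M rho x y.
Proof.
  intros [c [Hc HK]] Hx Hy. apply HK in Hx, Hy. destruct Hx as [_ Hx], Hy as [_ Hy].
  eapply rsim_trans; eauto. apply rsim_sym; auto.
Qed.

Lemma basic_class_Rrec K x : basic_class M rho K -> K x -> Rrec M rho x.
Proof. intros [c [Hc HK]] Hx. apply HK in Hx. apply Hx. Qed.

Lemma rclass_basic_class w : Rrec M rho w -> basic_class M rho (rclass M rho w).
Proof. intro H. exists w. split; auto. tauto. Qed.

Lemma rclass_refl w : Rrec M rho w -> rclass M rho w w.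
Proof. intro H. split; auto. apply H. Qed.

Lemma basic_class_rsim_mem K a z : basic_class M rho K -> K a ->
  Rrec M rho z -> rsim M rho z a -> K z.
Proof.
  intros [c [Hc HK]] Ha Hz Hza. apply HK. apply HK in Ha. destruct Ha as [_ Hac].
  split; auto. exact (rsim_trans z a c Hza Hac).
Qed.
End Chains.

Section Dynamics.
Context {d : nat} (M : set d) (F : Pt d -> Pt d) (rho : Pt d -> Pt d -> ER).
Hypothesis Hrho0 : forall x y, ele (EFin 0) (rho x y).
Hypothesis HFM : forall x, M x -> M (F x).
Hypothesis Hzero : forall x y, M x -> M y -> (rho x y = EFin 0 <-> y = F x).

Lemma iter_in_M k x : M x -> M (Nat.iter k F x).
Proof. intro; induction k; simpl; auto. Qed.

Lemma cheap_chain_orbit x k del : M x -> (1 <= k)%nat -> 0 < del ->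
  cheap_chain M rho del x (Nat.iter k F x).
Proof.
  intros Hx Hk Hd. exists k, (fun i => Nat.iter i F x). repeat split; auto.
  - intros; apply iter_in_M; auto.
  - exists 0. split; auto. unfold Acost.
    assert (forall m, esum m (fun i => rho (Nat.iter i F x) (Nat.iter (S i) F x)) = EFin 0);
      [|auto].
    induction m; cbn [esum]; auto. rewrite IHm.
    rewrite (proj2 (Hzero _ _ (iter_in_M m x Hx) (iter_in_M (S m) x Hx)) eq_refl).
    simpl. f_equal; ring.
Qed.

Hypothesis Hiii : forall beta, 0 < beta ->
     elt (EFin 0) (einf (fun a => exists x y, M x /\ M y /\
                          dmax (F x) y > beta /\ a = rho x y)).

Lemma cheap_step_near_image : exists c1, 0 < c1 /\
  forall x y r, M x -> M y -> rho x y = EFin r -> r < c1 -> dmax (F x) y <= 1.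
Proof.
  specialize (Hiii 1 ltac:(lra)).
  set (S := fun a => exists x y, M x /\ M y /\ dmax (F x) y > 1 /\ a = rho x y) in *.
  assert (Hn : nonneg_set S) by (intros a (x & y & _ & _ & _ & ->); apply Hrho0).
  destruct (einf S) as [c|] eqn:E.
  - destruct Hiii as [H1 H2]. simpl in H1. assert (0 < c) by (destruct H1; auto; subst; congruence).
    exists c; split; auto. intros x y r Hx Hy Hr Hrc.
    apply Rnot_lt_le; intro Hlt.
    assert (ele (einf S) (rho x y)) by (apply einf_le; auto; exists x, y; repeat split; auto; lra).
    rewrite E, Hr in H0; simpl in H0; lra.
  - exists 1; split; [lra|]. intros x y r Hx Hy Hr _. apply Rnot_lt_le; intro Hlt.
    assert (ele (einf S) (rho x y)) by (apply einf_le; auto; exists x, y; repeat split; auto; lra).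
    rewrite E, Hr in H; simpl in H; auto.
Qed.

Hypothesis HB : exists B, forall x, M x -> norm (F x) <= B.

(* The last step of a cheap chain from [x] back to [x] starts at some [z] with
   [dmax (F z) x <= 1], and [F] is bounded. *)
Lemma Rrec_bounded : exists Rb, forall x, Rrec M rho x -> dist x origin <= Rb.
Proof.
  destruct cheap_step_near_image as [c1 [Hc1 Hc]]. destruct HB as [B HBd].
  exists (B + sqrt (INR d)). intros x [Hx [Hxx _]].
  destruct (rlt_cheap_chain M rho Hrho0 x x Hxx c1 Hc1)
    as (n & xi & H1 & H2 & H3 & H4 & s & Hs & Hs1).
  destruct (esum_EFin_term n _ s (fun i => Hrho0 _ _) Hs (n - 1) ltac:(lia)) as [r [Hr Hr1]].
  replace (S (n - 1)) with n in Hr by lia. rewrite H4 in Hr.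
  assert (Hm : M (xi (n - 1)%nat)) by (apply H2; lia).
  pose proof (Hc _ _ r Hm Hx Hr ltac:(lra)) as Hdm.
  pose proof (dist_triangle x (F (xi (n-1)%nat)) origin).
  rewrite <- (norm_dist_origin (F (xi (n-1)%nat))) in H. pose proof (HBd _ Hm).
  assert (Hq : dist x (F (xi (n - 1)%nat)) <= sqrt (INR d)). 2:{ lra. }
  unfold dist, norm. apply sqrt_le_1_alt. apply fsum_sq_le_dim. intro i.
  rewrite Rabs_minus_sym. eapply Rle_trans; [|apply Hdm]. unfold dmax.
  apply (fmax_ge_term d (fun i => Rabs (F (xi (n - 1)%nat) i - x i))).
Qed.
End Dynamics.

Section Recurrence.
Context {d : nat} (M M1 : set d) (F : Pt d -> Pt d) (rho : Pt d -> Pt d -> ER).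
Hypothesis Hrho0 : forall x y, ele (EFin 0) (rho x y).
Hypothesis HFM : forall x, M x -> M (F x).
Hypothesis HFc : rcontinuous M F.
Hypothesis HM1 : forall x, M1 x -> M x.
Hypothesis Hzero : forall x y, M x -> M y -> (rho x y = EFin 0 <-> y = F x).
Hypothesis Hcont : forall x y r, M1 x -> M y -> rho x y = EFin r ->
  forall e, 0 < e -> exists del, 0 < del /\
    forall x' y', M1 x' -> M y' -> dist x x' < del -> dist y y' < del ->
      exists r', rho x' y' = EFin r' /\ Rabs (r' - r) < e.

Lemma rho_small_near_graph x : M1 x -> forall e, 0 < e -> exists del, 0 < del /\
    forall x' y', M1 x' -> M y' -> dist x x' < del -> dist (F x) y' < del ->
      exists r', rho x' y' = EFin r' /\ r' < e.
Proof.
  intros Hx e He. destruct (Hcont x (F x) 0 Hx (HFM x (HM1 x Hx))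
    (proj2 (Hzero _ _ (HM1 x Hx) (HFM x (HM1 x Hx))) eq_refl) e He) as [del [Hd H]].
  exists del; split; auto. intros x' y' H1 H2 H3 H4.
  destruct (H x' y' H1 H2 H3 H4) as [r' [E1 E2]].
  exists r'; split; auto. rewrite Rminus_0_r in E2. pose proof (Rle_abs r'). lra.
Qed.

Lemma cheap_step_to_image u : M1 u -> forall del, 0 < del -> exists e, 0 < e /\
  forall y, M1 y -> dist u y < e -> cheap_chain M rho del y (F u).
Proof.
  intros Hu del Hdel. destruct (rho_small_near_graph u Hu del Hdel) as [e [He Hc]].
  exists e; split; auto. intros y Hy Hd.
  assert (HFu : M (F u)) by auto.
  destruct (Hc y (F u) Hy HFu Hd) as [r [Er Hr]]; [rewrite dist_refl; auto|].
  apply (cheap_chain_step M rho _ _ r); auto.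
Qed.

Lemma cheap_step_from w : M1 w -> forall del, 0 < del -> exists e, 0 < e /\
  forall y, M y -> dist (F w) y < e -> cheap_chain M rho del w y.
Proof.
  intros Hw del Hdel. destruct (rho_small_near_graph w Hw del Hdel) as [e [He Hc]].
  exists e; split; auto. intros y Hy Hd.
  destruct (Hc w y Hw Hy) as [r [Er Hr]]; [rewrite dist_refl; auto|auto|].
  apply (cheap_chain_step M rho _ _ r); auto.
Qed.

(* The image [w = F u] of a cluster point [u] of the orbit of [z] is reached from [z], and
   from itself, by cheap chains: follow the orbit until it is close to [u], then jump to [w]. *)
Lemma orbit_cluster_image_Rrec (D : set d) z : compact D -> is_closed D ->
  (forall x, D x -> M1 x) -> M z -> (forall n, D (Nat.iter n F z)) ->
  exists w, D w /\ Rrec M rho w /\ forall del, 0 < del -> cheap_chain M rho del z w.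
Proof.
  intros HK Hcl HD1 Hz Hs.
  set (s := fun k => Nat.iter k F z).
  assert (HsM : forall k, M (s k)) by (intro; apply iter_in_M; auto).
  destruct (compact_cluster_point D s HK Hs) as [u [Hu Hclu]].
  assert (HuM : M u) by auto.
  set (w := F u).
  assert (HwM : M w) by (apply HFM; auto).
  assert (Hw : D w).
  { apply Hcl. intros e He. destruct (HFc u HuM e He) as [del [Hd H]].
    destruct (Hclu del Hd O) as [n [_ Hn]]. exists (s (S n)). split; [apply Hs|].
    rewrite dist_sym. simpl. apply H; auto. }
  assert (Hjump : forall del N, 0 < del -> exists m, (N <= m)%nat /\
                    cheap_chain M rho del (s m) w).
  { intros del N Hdel. destruct (cheap_step_to_image u (HD1 u Hu) del Hdel) as [e [He Hc]].
    destruct (Hclu e He N) as [m [Hm Hmu]]. exists m; split; auto.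
    apply Hc; [apply HD1, Hs|]. rewrite dist_sym; auto. }
  assert (Hzw : forall del, 0 < del -> cheap_chain M rho del z w).
  { intros del Hdel. destruct (Hjump (del/2) 1%nat ltac:(lra)) as [m [Hm1 Hm]].
    replace del with (del/2 + del/2) by field.
    apply cheap_chain_trans with (s m); auto.
    apply cheap_chain_orbit; auto; lra. }
  assert (Hww : rlt M rho w w).
  { apply cheap_chain_rlt; auto. intros del Hdel.
    destruct (cheap_step_from w (HD1 w Hw) (del/3) ltac:(lra)) as [e1 [He1 Hf1]].
    destruct (HFc w HwM e1 He1) as [e2 [He2 Hf2]].
    destruct (HFc u HuM e2 He2) as [e3 [He3 Hf3]].
    destruct (Hclu e3 He3 O) as [n [_ Hn]].
    destruct (Hjump (del/3) (n + 3)%nat ltac:(lra)) as [m [Hm1 Hm]].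
    assert (H1 : dist (s (S n)) w < e2) by (apply Hf3; auto).
    assert (H2 : dist (s (S (S n))) (F w) < e1) by (apply Hf2; auto).
    replace del with (del/3 + del/3 + del/3) by field.
    apply cheap_chain_trans with (s m); auto.
    apply cheap_chain_trans with (s (S (S n))).
    - apply Hf1; auto. rewrite dist_sym; auto.
    - replace (s m) with (Nat.iter (m - S (S n)) F (s (S (S n)))).
      + apply cheap_chain_orbit; auto; [lia|lra].
      + unfold s. rewrite <- Nat.iter_add. f_equal; lia. }
  exists w. repeat split; auto.
Qed.
End Recurrence.

Lemma not_quasiattractor_above {d} (M : set d) rho K :
  (forall x y, ele (EFin 0) (rho x y)) -> basic_class M rho K -> ~ quasiattractor M rho K ->
  exists K' x y, basic_class M rho K' /\ K x /\ K' y /\ rlt M rho x y /\ ~ rlt M rho y x.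
Proof.
  intros H0 HK HnQA. apply NNPP; intro Hn. apply HnQA. split; [exact HK|].
  intros K' HK' [x [y [Hx [Hy Hlt]]]] w.
  assert (Hs : rsim M rho y x)
    by (split; auto; apply NNPP; intro H; apply Hn; exists K', x, y; auto).
  split; intro Hw.
  - apply (basic_class_rsim_mem M rho H0 K x w HK Hx);
      [exact (basic_class_Rrec M rho K' w HK' Hw)|].
    exact (rsim_trans M rho H0 _ _ _ (basic_class_rsim M rho H0 K' w y HK' Hw Hy) Hs).
  - apply (basic_class_rsim_mem M rho H0 K' y w HK' Hy);
      [exact (basic_class_Rrec M rho K w HK Hw)|].
    exact (rsim_trans M rho H0 _ _ _ (basic_class_rsim M rho H0 K w x HK Hw Hx)
             (rsim_sym M rho _ _ Hs)).
Qed.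

Lemma finite_min (v : nat) (P : nat -> R -> Prop) :
  (forall i r r', P i r -> 0 < r' <= r -> P i r') ->
  (forall i, (i < v)%nat -> exists r, 0 < r /\ P i r) ->
  exists r, 0 < r /\ forall i, (i < v)%nat -> P i r.
Proof.
  intros Hm. induction v; intro H.
  - exists 1; split; [lra|]. intros; lia.
  - destruct IHv as [r1 [Hr1 H1]]; [intros; apply H; lia|].
    destruct (H v ltac:(lia)) as [r2 [Hr2 H2]].
    exists (Rmin r1 r2). split; [apply Rmin_glb_lt; auto|].
    intros i Hi. destruct (Nat.eq_dec i v).
    + subst. apply Hm with r2; auto. split; [apply Rmin_glb_lt; auto|apply Rmin_r].
    + apply Hm with r1; [apply H1; lia|]. split; [apply Rmin_glb_lt; auto|apply Rmin_l].
Qed.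

Lemma least_nat (P : nat -> Prop) n : P n ->
  exists k, (k <= n)%nat /\ P k /\ forall i, (i < k)%nat -> ~ P i.
Proof.
  revert P. induction n as [n IH] using (well_founded_induction lt_wf). intros P Hn.
  destruct (classic (exists i, (i < n)%nat /\ P i)) as [[i [Hi Pi]]|Hno].
  - destruct (IH i Hi P Pi) as [k [Hk1 Hk2]]. exists k; split; auto; lia.
  - exists n; split; auto. split; auto. intros i Hi Pi. apply Hno; eauto.
Qed.

Lemma up_pred_gt t : 0 < t -> t < INR (Z.to_nat (up t) - 1) + 1.
Proof.
  intro Ht. destruct (archimed t) as [H1 H2].
  assert (Hp : (0 < up t)%Z) by (apply lt_0_IZR; lra).
  rewrite minus_INR by lia. rewrite INR_IZR_INZ, Z2Nat.id by lia. simpl. lra.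
Qed.

Lemma exp_neg_exp_vanishes a c : 0 < a -> 0 < c -> forall e, 0 < e ->
  exists del, 0 < del /\
    forall eps, 0 < eps -> eps < del -> exp (- (exp (a / eps) / c - 1)) < e.
Proof.
  intros Ha Hc e He. set (A := c * (Rabs (ln e) + 2)).
  assert (HA : 0 < A) by (unfold A; pose proof (Rabs_pos (ln e)); nra).
  exists (a / A). split; [apply Rdiv_lt_0_compat; auto|]. intros eps Heps Hd.
  assert (HAe : A < a / eps).
  { apply (Rmult_lt_compat_r A) in Hd; auto.
    replace (a / A * A) with a in Hd by (field; lra).
    apply (Rmult_lt_reg_r eps); auto. replace (a / eps * eps) with a by (field; lra). lra. }
  pose proof (exp_ineq1_le (a / eps)).
  assert (Hq : Rabs (ln e) + 2 < exp (a / eps) / c).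
  { apply (Rmult_lt_reg_r c); auto. replace (exp (a / eps) / c * c) with (exp (a / eps))
      by (field; lra). unfold A in HAe. lra. }
  rewrite <- (exp_ln e He). apply exp_increasing.
  pose proof (Rle_abs (- ln e)). rewrite Rabs_Ropp in H0. lra.
Qed.

(** * Escape from a non-quasiattractor *)

Definition rball {d} (M : set d) (c : Pt d) (r : R) : set d := fun y => M y /\ dist y c < r.

Lemma rball_borel {d} (M : set d) c r : borel M (rball M c r).
Proof.
  apply borel_open. split; [intros x Hx; apply Hx|]. intros x [Hx Hd].
  exists (r - dist x c). split; [lra|]. intros y Hy Hdy. split; auto.
  pose proof (dist_triangle y x c). lra.
Qed.

Section Escape.
Context {d : nat} (M M0 : set d) (F : Pt d -> Pt d) (p : R -> Pt d -> set d -> R)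
  (rho : Pt d -> Pt d -> ER) (v : nat) (Ks : nat -> set d) (j : nat).
Let M1 := M1of M M0.
Let Kj := Ks j.
Hypothesis HMc : is_closed M.
Hypothesis HFM : forall x, M x -> M (F x).
Hypothesis HFc : rcontinuous M F.
Hypothesis HFB : exists B, forall x, M x -> norm (F x) <= B.
Hypothesis Hprob : forall eps, 0 < eps -> forall x, M x -> is_prob M (p eps x).
Hypothesis HM0c : rclosed M M0.
Hypothesis Hrho0 : forall x y, ele (EFin 0) (rho x y).
Hypothesis Hcont : forall x y r, M1 x -> M y -> rho x y = EFin r ->
  forall e, 0 < e -> exists del, 0 < del /\
    forall x' y', M1 x' -> M y' -> dist x x' < del -> dist y y' < del ->
      exists r', rho x' y' = EFin r' /\ Rabs (r' - r) < e.
Hypothesis Hzero : forall x y, M x -> M y -> (rho x y = EFin 0 <-> y = F x).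
Hypothesis Hiii : forall beta, 0 < beta ->
  elt (EFin 0) (einf (fun a => exists x y, M x /\ M y /\ dmax (F x) y > beta /\ a = rho x y)).
Hypothesis Hlower : forall K U e, compact K -> (forall x, K x -> M1 x) -> is_open_ball M U ->
  0 < e -> exists eps0, 0 < eps0 /\
    forall x eps, K x -> 0 < eps -> eps < eps0 ->
      match einf_over U (rho x) with
      | EFin r => exp (- (r + e) / eps) <= p eps x U
      | EInf => True
      end.
Hypothesis HK1 : forall i, (i < v)%nat ->
  basic_class M rho (Ks i) /\ (forall x, Ks i x -> M1 x) /\ rclosed M (Ks i).
Hypothesis HK2 : forall K, basic_class M rho K -> (forall x, K x -> M1 x) ->
  exists i, (i < v)%nat /\ forall x, K x <-> Ks i x.
Hypothesis Hj : (j < v)%nat.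
Hypothesis HnQA : ~ quasiattractor M rho Kj.

Lemma M1_sub_M x : M1 x -> M x.
Proof. intro H; apply H. Qed.

Lemma Kj_basic_class : basic_class M rho Kj.
Proof. apply HK1; auto. Qed.

Lemma Kj_sub_M1 x : Kj x -> M1 x.
Proof. apply HK1; auto. Qed.

Lemma Kj_nonempty : exists x0, Kj x0.
Proof. destruct Kj_basic_class as [c [Hc HK]]. exists c. apply HK. split; auto. apply Hc. Qed.

Definition closed_nbhd (r : R) : set d :=
  fun x => M x /\ forall e, 0 < e -> exists k, Kj k /\ dist x k < r + e.

Lemma closed_nbhd_closed r : is_closed (closed_nbhd r).
Proof.
  intros x Hx. split.
  - apply HMc. intros e He. destruct (Hx e He) as [y [[Hy _] Hd]]. eauto.
  - intros e He. destruct (Hx (e/2) ltac:(lra)) as [y [[_ Hy] Hd]].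
    destruct (Hy (e/2) ltac:(lra)) as [k [Hk Hk2]]. exists k. split; auto.
    pose proof (dist_triangle x y k). lra.
Qed.

Lemma closed_nbhd_compact r : compact (closed_nbhd r).
Proof.
  destruct (Rrec_bounded M F rho Hrho0 Hiii HFB) as [Rb HRb].
  apply (closed_bounded_compact (closed_nbhd r) origin (r + 1 + Rb) (closed_nbhd_closed r)).
  intros x [Hx H]. destruct (H 1 ltac:(lra)) as [k [Hk Hd]].
  pose proof (HRb k (basic_class_Rrec M rho Kj k Kj_basic_class Hk)).
  pose proof (dist_triangle x k origin). lra.
Qed.

Lemma Kj_compact : compact Kj.
Proof.
  apply (compact_closed_subset (closed_nbhd 0)).
  - apply closed_nbhd_compact.
  - apply (rclosed_is_closed M); [apply HMc|apply HK1; auto].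
  - intros x Hx. split; [apply M1_sub_M, Kj_sub_M1; auto|].
    intros e He. exists x. rewrite dist_refl. split; auto; lra.
Qed.

Lemma Kj_separated : exists r, 0 < r /\ (forall x y, Kj x -> M0 y -> r <= dist x y) /\
  forall i, (i < v)%nat ->
    (exists c, Ks i c /\ Kj c) \/ (forall x y, Kj x -> Ks i y -> r <= dist x y).
Proof.
  destruct (compact_closed_dist_pos Kj M0 Kj_compact (rclosed_is_closed M M0 HMc HM0c))
    as [r0 [Hr0 H0]].
  { intros x Hx. apply Kj_sub_M1 in Hx. apply Hx. }
  destruct (finite_min v (fun i r => (exists c, Ks i c /\ Kj c) \/
                                      (forall x y, Kj x -> Ks i y -> r <= dist x y)))
    as [r1 [Hr1 H1]].
  - intros i r r' [H|H] Hr; [left; auto|right].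
    intros x y Hx Hy. specialize (H x y Hx Hy). lra.
  - intros i Hi. destruct (classic (exists c, Ks i c /\ Kj c)) as [Hc|Hc].
    + exists 1; split; [lra|left; auto].
    + destruct (compact_closed_dist_pos Kj (Ks i) Kj_compact
                  (rclosed_is_closed M _ HMc (proj2 (proj2 (HK1 i Hi))))) as [r [Hr H]].
      { intros x Hx Hx'. apply Hc; eauto. }
      exists r; split; auto.
  - exists (Rmin r0 r1). split; [apply Rmin_glb_lt; auto|]. split.
    + intros x y Hx Hy. eapply Rle_trans; [apply Rmin_l|]. auto.
    + intros i Hi. destruct (H1 i Hi) as [H|H]; [left; auto|right].
      intros x y Hx Hy. eapply Rle_trans; [apply Rmin_r|]. auto.
Qed.

Section Separated.
Variable eta : R.
Hypothesis Heta : 0 < eta.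
Hypothesis Hsep0 : forall x y, Kj x -> M0 y -> 8 * eta <= dist x y.
Hypothesis Hsepi : forall i, (i < v)%nat ->
  (exists c, Ks i c /\ Kj c) \/ (forall x y, Kj x -> Ks i y -> 8 * eta <= dist x y).

Lemma closed_nbhd_sub_M1 r : r < 8 * eta -> forall x, closed_nbhd r x -> M1 x.
Proof.
  intros Hr x [Hx H]. split; auto. intro H0.
  destruct (H (8 * eta - r) ltac:(lra)) as [k [Hk Hd]].
  pose proof (Hsep0 k x Hk H0). rewrite dist_sym in Hd. lra.
Qed.

Definition far (x : Pt d) : Prop := forall k, Kj k -> 2 * eta <= dist x k.

Definition escapes (z : Pt d) : Prop :=
  forall del, 0 < del -> far z \/ exists e, far e /\ cheap_chain M rho del z e.

Lemma not_far_closed_nbhd x : M x -> ~ far x -> closed_nbhd (2 * eta) x.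
Proof.
  intros Hx Hn. split; auto. intros e He. apply NNPP; intro H. apply Hn. intros k Hk.
  apply Rnot_lt_le; intro Hlt. apply H. exists k; split; auto. lra.
Qed.

(* The class of [w] is either some [K_i], which must then be [Kj] by the separation,
   or it meets [M0], which is far from [Kj]. *)
Lemma Rrec_near_Kj w x0 : Kj x0 -> Rrec M rho w -> closed_nbhd (2 * eta) w ->
  rlt M rho w x0 \/ exists m, far m /\ rlt M rho w m.
Proof.
  intros Hx0 Hrw Hw.
  destruct (classic (forall x, rclass M rho w x -> M1 x)) as [Hin|Hout].
  - destruct (HK2 _ (rclass_basic_class M rho w Hrw) Hin) as [i [Hi Heq]].
    destruct (Hsepi i Hi) as [[c [Hc1 Hc2]]|Hfar].
    + left. apply Heq in Hc1. destruct Hc1 as [_ Hcw].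
      pose proof (basic_class_rsim M rho Hrho0 Kj c x0 Kj_basic_class Hc2 Hx0) as Hcx.
      apply (rsim_trans M rho Hrho0 w c x0 (rsim_sym M rho _ _ Hcw) Hcx).
    + exfalso. assert (Hwi : Ks i w) by (apply Heq; apply rclass_refl; auto).
      destruct Hw as [_ Hw]. destruct (Hw eta Heta) as [k [Hk Hd]].
      pose proof (Hfar k w Hk Hwi). rewrite dist_sym in Hd. lra.
  - right. apply not_all_ex_not in Hout. destruct Hout as [m Hm].
    apply imply_to_and in Hm. destruct Hm as [[Hrm Hmw] Hm1].
    assert (HM0 : M0 m) by (apply NNPP; intro H; apply Hm1; split; [apply Hrm|auto]).
    exists m. split; [|apply Hmw].
    intros k Hk. pose proof (Hsep0 k m Hk HM0). rewrite dist_sym. lra.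
Qed.

Lemma escapes_of_cheap_chain z y : (forall del, 0 < del -> cheap_chain M rho del z y) ->
  escapes y -> escapes z.
Proof.
  intros Hzy Hy del Hd. right. destruct (Hy (del/2) ltac:(lra)) as [Hf|[e [He Hc]]].
  - exists y. split; [exact Hf|apply Hzy; exact Hd].
  - exists e. split; [exact He|]. replace del with (del/2 + del/2) by field.
    apply cheap_chain_trans with y; [apply Hzy; lra|exact Hc].
Qed.

Lemma far_escapes z : far z -> escapes z.
Proof. intros Hz del Hd. left; auto. Qed.

(* Either the orbit of [y] gets far from [Kj], or it stays in the compact closed
   [2 eta]-neighbourhood and accumulates at a recurrent point near [Kj]. *)
Lemma escapes_or_rlt_Kj x0 y : Kj x0 -> M y -> escapes y \/ rlt M rho y x0.
Proof.
  intros Hx0 Hy.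
  destruct (classic (exists n, far (Nat.iter n F y))) as [[n Hn]|Hno].
  - left. destruct n as [|n]; [apply far_escapes; auto|].
    apply (escapes_of_cheap_chain _ (Nat.iter (S n) F y)); [|apply far_escapes; auto].
    intros del Hd. apply (cheap_chain_orbit M F rho HFM Hzero); auto. lia.
  - assert (HD : forall n, closed_nbhd (2 * eta) (Nat.iter n F y)).
    { intro n. apply not_far_closed_nbhd; [apply (iter_in_M M F HFM); auto|].
      intro H; apply Hno; eauto. }
    destruct (orbit_cluster_image_Rrec M M1 F rho Hrho0 HFM HFc M1_sub_M Hzero Hcont
       (closed_nbhd (2 * eta)) y (closed_nbhd_compact _) (closed_nbhd_closed _)
       (closed_nbhd_sub_M1 (2 * eta) ltac:(lra)) Hy HD) as [w [Hw [Hrw Hyw]]].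
    destruct (Rrec_near_Kj w x0 Hx0 Hrw Hw) as [Hwx0|[m [Hm Hwm]]].
    + right. apply (rlt_trans M rho Hrho0 y w x0); auto. apply cheap_chain_rlt; auto.
    + left. apply (escapes_of_cheap_chain _ m); [|apply far_escapes; auto].
      intros del Hd. replace del with (del/2 + del/2) by field.
      apply cheap_chain_trans with w; [apply Hyw; lra|].
      apply rlt_cheap_chain; auto; lra.
Qed.

(* Since [Kj] is not a quasiattractor, some class strictly above [Kj] exists; its points
   cannot chain back to [Kj], so they escape, and everything chaining to [Kj] follows them. *)
Lemma escapes_everywhere z : M z -> escapes z.
Proof.
  intro Hz. destruct Kj_nonempty as [x0 Hx0].
  destruct (not_quasiattractor_above M rho Kj Hrho0 Kj_basic_class HnQA)
    as [K' [xq [yq [HK' [Hxq [Hyq [Hlt Hnlt]]]]]]].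
  assert (HyqM : M yq) by apply (basic_class_Rrec M rho K' yq HK' Hyq).
  assert (Hx0q : rsim M rho x0 xq)
    by exact (basic_class_rsim M rho Hrho0 Kj x0 xq Kj_basic_class Hx0 Hxq).
  destruct (escapes_or_rlt_Kj x0 z Hx0 Hz) as [Hez|Hzx0]; auto.
  destruct (escapes_or_rlt_Kj x0 yq Hx0 HyqM) as [Hey|Hyx0].
  - apply (escapes_of_cheap_chain _ yq); auto. apply rlt_cheap_chain; auto.
    apply (rlt_trans M rho Hrho0 z xq yq); auto.
    apply (rlt_trans M rho Hrho0 z x0 xq); auto. apply Hx0q.
  - exfalso. apply Hnlt. apply (rlt_trans M rho Hrho0 yq x0 xq); auto. apply Hx0q.
Qed.

Lemma first_exit_chain z del : M z -> escapes z -> 0 < del -> exists n xi s, xi O = z /\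
  (forall i, (i <= n)%nat -> M (xi i)) /\ (forall i, (i < n)%nat -> ~ far (xi i)) /\
  far (xi n) /\ Acost rho n xi = EFin s /\ s < del.
Proof.
  intros Hz Hesc Hd. destruct (Hesc del Hd) as [Hf|[e [He Hc]]].
  - exists O, (fun _ => z), 0. repeat split; auto. lia.
  - destruct Hc as (n1 & xi & H1 & H2 & H3 & H4 & s1 & Hs1 & Hs1').
    destruct (least_nat (fun k => far (xi k)) n1) as [k [Hk1 [Hk2 Hk3]]]; [rewrite H4; auto|].
    unfold Acost in Hs1. replace n1 with (k + (n1 - k))%nat in Hs1 by lia.
    rewrite esum_add in Hs1. destruct (eadd_EFin_inv _ _ _ Hs1) as [a [b [Ea [Eb Es]]]].
    pose proof (esum_nonneg (n1 - k) (fun i => rho (xi (k + i)%nat) (xi (S (k + i))))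
                  (fun _ => Hrho0 _ _)) as Hb.
    rewrite Eb in Hb; simpl in Hb.
    exists k, xi, a. repeat split; auto. intros i Hi; apply H2; lia. lra.
Qed.

(* Continuity of [rho] and the large deviation lower bound, uniform on the compact
   closed [3 eta]-neighbourhood of [Kj]. *)
Lemma cheap_step_prob x0 x1 c0 r' del' : closed_nbhd (2 * eta) x0 -> M x1 ->
  rho x0 x1 = EFin c0 -> 0 < r' -> 0 < del' ->
  exists r e0, 0 < r /\ 0 < e0 /\ forall eps x, 0 < eps -> eps < e0 -> M x ->
    dist x x0 < r -> exp (- (c0 + 2 * del') / eps) <= p eps x (rball M x1 r').
Proof.
  intros Hx0 Hx1 Ec0 Hr' Hdel.
  assert (Hx0M1 : M1 x0) by (apply (closed_nbhd_sub_M1 (2 * eta)); auto; lra).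
  set (U := rball M x1 r').
  assert (HUb : is_open_ball M U) by (exists x1, r'; repeat split; auto; apply H).
  destruct (Hcont x0 x1 c0 Hx0M1 Hx1 Ec0 del' Hdel) as [dl [Hdl Hc]].
  destruct (Hlower (closed_nbhd (3 * eta)) U del' (closed_nbhd_compact _)
              (closed_nbhd_sub_M1 (3 * eta) ltac:(lra)) HUb Hdel) as [e0 [He0 Hlow]].
  exists (Rmin eta dl), e0. split; [apply Rmin_glb_lt; auto|]. split; auto.
  intros eps x He1 He2 Hx Hd.
  pose proof (Rmin_l eta dl). pose proof (Rmin_r eta dl).
  assert (HxD : closed_nbhd (3 * eta) x).
  { split; auto. intros e He. destruct (proj2 Hx0 e He) as [k [Hk Hdk]].
    exists k; split; auto. pose proof (dist_triangle x x0 k). lra. }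
  assert (HxM1 : M1 x) by (apply (closed_nbhd_sub_M1 (3 * eta)); auto; lra).
  destruct (Hc x x1 HxM1 Hx1) as [r1 [Er1 Hr1c]].
  { rewrite dist_sym; lra. } { rewrite dist_refl; auto. }
  assert (Hin : ele (einf_over U (rho x)) (rho x x1)).
  { apply einf_le.
    - intros a [y [_ ->]]. apply Hrho0.
    - exists x1. split; auto. split; auto. rewrite dist_refl; auto. }
  specialize (Hlow x eps HxD He1 He2).
  rewrite Er1 in Hin. destruct (einf_over U (rho x)) as [r2|]; [|contradiction].
  simpl in Hin. eapply Rle_trans; [|apply Hlow]. apply exp_le_exp. unfold Rdiv.
  apply Rmult_le_compat_r; [left; apply Rinv_0_lt_compat; auto|].
  pose proof (Rle_abs (r1 - c0)). lra.
Qed.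

Let V := Nbhd M Kj eta.

Lemma V_sub_M x : V x -> M x.
Proof. intro H; apply H. Qed.

Lemma surv_along_chain n : forall xi s del', 0 < del' ->
  (forall i, (i <= n)%nat -> M (xi i)) -> (forall i, (i < n)%nat -> ~ far (xi i)) ->
  far (xi n) -> Acost rho n xi = EFin s ->
  exists r e0, 0 < r /\ 0 < e0 /\ forall eps, 0 < eps -> eps < e0 -> forall x, M x ->
    dist x (xi O) < r -> surv M (p eps) V n x <= 1 - exp (- (s + 2 * INR n * del') / eps).
Proof.
  induction n as [|n IH]; intros xi s del' Hdel HM Hnf Hf Hs.
  - simpl in Hs. injection Hs; intro; subst s.
    exists eta, 1. split; auto. split; [lra|]. intros eps He1 He2 x Hx Hd.
    simpl. rewrite ind_false.
    + replace (- (0 + 2 * 0 * del') / eps) with 0 by (field; lra). rewrite exp_0; lra.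
    + intros [_ [k [Hk Hdk]]]. pose proof (Hf k Hk). pose proof (dist_triangle (xi O) x k).
      rewrite dist_sym in Hd. lra.
  - rewrite Acost_S in Hs. destruct (eadd_EFin_inv _ _ _ Hs) as [c0 [s' [Ec0 [Es' Ess]]]].
    destruct (IH (fun i => xi (S i)) s' del' Hdel) as [r' [e0' [Hr' [He0' Hb]]]]; auto.
    { intros i Hi; apply HM; lia. } { intros i Hi; apply Hnf; lia. }
    assert (Hx0 : closed_nbhd (2 * eta) (xi O))
      by (apply not_far_closed_nbhd; [apply HM; lia|apply Hnf; lia]).
    destruct (cheap_step_prob (xi O) (xi 1%nat) c0 r' del' Hx0 (HM 1%nat ltac:(lia)) Ec0 Hr' Hdel)
      as [r [e0 [Hr [He0 Hstep]]]].
    exists r, (Rmin e0' e0). split; auto. split; [apply Rmin_glb_lt; auto|].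
    intros eps He1 He2 x Hx Hd.
    pose proof (Rmin_l e0' e0). pose proof (Rmin_r e0' e0).
    set (q' := exp (- (s' + 2 * INR n * del') / eps)).
    assert (Hs'0 : 0 <= s').
    { pose proof (Acost_nonneg rho Hrho0 n (fun i => xi (S i))) as H'.
      rewrite Es' in H'; exact H'. }
    assert (Hq' : 0 <= q' <= 1).
    { split; [left; apply exp_pos|]. unfold q'. rewrite <- exp_0. apply exp_le_exp.
      assert (0 <= (s' + 2 * INR n * del') / eps); [|lra].
      apply Rmult_le_pos; [|left; apply Rinv_0_lt_compat; auto].
      pose proof (pos_INR n). nra. }
    eapply Rle_trans.
    { apply (surv_S_le M V (p eps) (Hprob eps He1) V_sub_M n x (rball M (xi 1%nat) r') q');
        auto using rball_borel.
      intros y Hy [_ HU]. apply Hb; auto; lra. }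
    assert (Hexp : exp (- (c0 + 2 * del') / eps) <= p eps x (rball M (xi 1%nat) r'))
      by (apply Hstep; auto; lra).
    assert (Heq : exp (- (s + 2 * INR (S n) * del') / eps) = q' * exp (- (c0 + 2 * del') / eps)).
    { unfold q'. rewrite <- exp_plus. f_equal. rewrite S_INR, Ess. field. lra. }
    rewrite Heq. pose proof (Rmult_le_compat_l q' _ _ (proj1 Hq') Hexp). lra.
Qed.

Lemma surv_block_local gam z : 0 < gam -> closed_nbhd eta z -> exists N r e0, 0 < r /\ 0 < e0 /\
  forall eps, 0 < eps -> eps < e0 -> forall x, M x -> dist x z < r ->
    surv M (p eps) V N x <= 1 - exp (- (gam / 2) / eps).
Proof.
  intros Hg Hz. assert (HzM : M z) by apply Hz.
  destruct (first_exit_chain z (gam / 4) HzM (escapes_everywhere z HzM) ltac:(lra))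
    as (n & xi & s & H0 & HM & Hnf & Hf & Hs & Hsl).
  set (dl := gam / (8 * (INR n + 1))).
  assert (Hn0 := pos_INR n).
  assert (Hdl : 0 < dl) by (unfold dl; apply Rdiv_lt_0_compat; lra).
  destruct (surv_along_chain n xi s dl Hdl HM Hnf Hf Hs) as [r [e0 [Hr [He0 Hb]]]].
  exists n, r, e0. split; auto. split; auto.
  intros eps He1 He2 x Hx Hd. rewrite <- H0 in Hd. eapply Rle_trans; [apply Hb; auto|].
  assert (exp (- (gam / 2) / eps) <= exp (- (s + 2 * INR n * dl) / eps)); [|lra].
  apply exp_le_exp. unfold Rdiv. apply Rmult_le_compat_r; [left; apply Rinv_0_lt_compat; auto|].
  assert (2 * INR n * dl <= gam / 4).
  { unfold dl. apply (Rmult_le_reg_r (8 * (INR n + 1))); [lra|].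
    field_simplify; [|lra]. nra. }
  pose proof (Acost_nonneg rho Hrho0 n xi) as Hc. rewrite Hs in Hc. simpl in Hc. lra.
Qed.

Lemma surv_block_uniform gam : 0 < gam -> exists N e0, 0 < e0 /\
  forall eps, 0 < eps -> eps < e0 ->
    forall y, surv M (p eps) V N y <= 1 - exp (- (gam / 2) / eps).
Proof.
  intro Hg.
  assert (Hloc : forall z, exists t : nat * R * R, closed_nbhd eta z ->
    0 < snd (fst t) /\ 0 < snd t /\
    forall eps, 0 < eps -> eps < snd t -> forall x, M x -> dist x z < snd (fst t) ->
      surv M (p eps) V (fst (fst t)) x <= 1 - exp (- (gam / 2) / eps)).
  { intro z. destruct (classic (closed_nbhd eta z)) as [Hz|Hz]; [|exists (O, 1, 1); tauto].
    destruct (surv_block_local gam z Hg Hz) as [N [r [e0 H]]]. exists (N, r, e0); auto. }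
  destruct (choice _ Hloc) as [g Hg1].
  destruct (closed_nbhd_compact eta _ (fun z x => closed_nbhd eta z /\ dist x z < snd (fst (g z))))
    as [l Hl].
  - intros z x [Hz Hd]. destruct (ball_is_open z _ x Hd) as [e [He Hb]].
    exists e; split; auto.
  - intros x Hx. exists x. split; auto. rewrite dist_refl. apply (Hg1 x Hx).
  - exists (lmaxn (fun z => fst (fst (g z))) l), (lmin (fun z => snd (g z)) l).
    split; [apply lmin_pos|]. intros eps He1 He2 y.
    destruct (classic (V y)) as [Hy|Hy].
    + assert (HyD : closed_nbhd eta y).
      { destruct Hy as [HyM [k [Hk Hdk]]]. split; auto. intros e He. exists k; split; auto; lra. }
      destruct (Hl y HyD) as [z [Hin [Hz Hd]]].
      destruct (Hg1 z Hz) as [Hr [He Hb]].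
      pose proof (lmaxn_ge (fun z => fst (fst (g z))) l z Hin) as HN. simpl in HN.
      pose proof (lmin_le (fun z => snd (g z)) l z Hin He) as Hle. simpl in Hle.
      replace (lmaxn (fun z => fst (fst (g z))) l) with
         (fst (fst (g z)) + (lmaxn (fun z => fst (fst (g z))) l - fst (fst (g z))))%nat by lia.
      eapply Rle_trans; [apply (surv_antitone M V (p eps) (Hprob eps He1) V_sub_M)|].
      apply Hb; auto; [lra|apply Hy].
    + rewrite (surv_outside M V (p eps) _ _ Hy).
      assert (exp (- (gam / 2) / eps) <= 1); [|lra].
      rewrite <- exp_0. apply exp_le_exp. unfold Rdiv.
      assert (0 <= gam / 2 * / eps)
        by (apply Rmult_le_pos; [lra|left; apply Rinv_0_lt_compat; auto]). lra.
Qed.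

Lemma tau_tail_bound gam : 0 < gam -> exists eps0 (zeta : R -> R), 0 < eps0 /\
  (forall eps, 0 < eps < eps0 -> 0 <= zeta eps <= 1) /\
  (forall e, 0 < e -> exists del, 0 < del /\
     forall eps, 0 < eps < eps0 -> eps < del -> Rabs (zeta eps) < e) /\
  (forall eps, 0 < eps < eps0 ->
     forall x, V x -> prob_tau_gt M (p eps) V (exp (gam / eps)) x <= zeta eps).
Proof.
  intro Hg. destruct (surv_block_uniform gam Hg) as [N [e0 [He0 HB]]].
  assert (HN : 0 < INR (S N)) by apply lt_0_INR, Nat.lt_0_succ.
  exists e0, (fun eps => Rmin 1 (exp (- (exp ((gam / 2) / eps) / INR (S N) - 1)))).
  split; auto. split; [|split].
  - intros eps _. split; [apply Rmin_glb; [lra|left; apply exp_pos]|apply Rmin_l].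
  - intros e He.
    destruct (exp_neg_exp_vanishes (gam / 2) (INR (S N)) ltac:(lra) HN e He) as [del [Hdel H]].
    exists del. split; auto. intros eps [He1 He2] Hd.
    rewrite Rabs_right by (apply Rle_ge, Rmin_glb; [lra|left; apply exp_pos]).
    eapply Rle_lt_trans; [apply Rmin_r|]. apply H; auto.
  - intros eps [He1 He2] x Hx. unfold prob_tau_gt.
    set (q := exp (- (gam / 2) / eps)). set (t := exp (gam / eps)).
    assert (Hq : 0 <= q <= 1).
    { split; [left; apply exp_pos|]. unfold q. rewrite <- exp_0. apply exp_le_exp.
      unfold Rdiv. assert (0 <= gam / 2 * / eps)
        by (apply Rmult_le_pos; [lra|left; apply Rinv_0_lt_compat; auto]). lra. }
    apply Rmin_glb; [apply (surv_bounds M V (p eps) (Hprob eps He1) V_sub_M)|].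
    eapply Rle_trans.
    { apply (surv_geometric M V (p eps) (Hprob eps He1) V_sub_M (S N) q); [lia|auto|].
      intro y. replace (S N) with (N + 1)%nat by lia.
      eapply Rle_trans; [apply (surv_antitone M V (p eps) (Hprob eps He1) V_sub_M)|].
      apply HB; auto. }
    apply exp_le_exp, Ropp_le_contravar.
    set (n := (Z.to_nat (up t) - 1)%nat).
    assert (Htn : t < INR n + 1) by apply up_pred_gt, exp_pos.
    assert (Htq : t * q = exp ((gam / 2) / eps))
      by (unfold t, q; rewrite <- exp_plus; f_equal; field; lra).
    assert (H1 : t / INR (S N) - 1 <= (INR n + 1) / INR (S N) - 1).
    { unfold Rdiv. apply Rplus_le_compat_r, Rmult_le_compat_r; [|lra].
      left; apply Rinv_0_lt_compat; auto. }
    apply (Rmult_le_compat_r q) in H1; [|lra].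
    assert (E : (t / INR (S N) - 1) * q = t * q / INR (S N) - q) by (field; lra).
    rewrite E, Htq in H1. lra.
Qed.
End Separated.

Lemma escape_from_non_quasiattractor : exists eta, 0 < eta /\
  forall gamma, 0 < gamma -> exists eps0 (zeta : R -> R), 0 < eps0 /\
    (forall eps, 0 < eps < eps0 -> 0 <= zeta eps <= 1) /\
    (forall e, 0 < e -> exists del, 0 < del /\
       forall eps, 0 < eps < eps0 -> eps < del -> Rabs (zeta eps) < e) /\
    (forall eps, 0 < eps < eps0 -> forall x, Nbhd M Kj eta x ->
       prob_tau_gt M (p eps) (Nbhd M Kj eta) (exp (gamma / eps)) x <= zeta eps).
Proof.
  destruct Kj_separated as [r [Hr [H0 Hi]]]. exists (r / 8). split; [lra|].
  intros gam Hg. apply (tau_tail_bound (r / 8)); auto; try lra.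
  - intros x y Hx Hy. specialize (H0 x y Hx Hy). lra.
  - intros i Hii. destruct (Hi i Hii) as [H|H]; [left; auto|right].
    intros x y Hx Hy. specialize (H x y Hx Hy). lra.
Qed.
End Escape.

Theorem mainTheorem15 (d : nat) (M M0 : set d) (F : Pt d -> Pt d)
  (p : R -> Pt d -> set d -> R) (rho : Pt d -> Pt d -> ER)
  (v : nat) (Ks : nat -> set d) (j : nat) :
  Setting M M0 F p ->
  LD M M0 F p rho ->
  (* the rho-basic classes contained in M1 are exactly K_0, ..., K_{v-1} *)
  (forall i, (i < v)%nat ->
     basic_class M rho (Ks i) /\ (forall x, Ks i x -> M1of M M0 x) /\
     rclosed M (Ks i)) ->
  (forall K, basic_class M rho K -> (forall x, K x -> M1of M M0 x) ->
     exists i, (i < v)%nat /\ forall x, K x <-> Ks i x) ->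
  (j < v)%nat ->
  ~ quasiattractor M rho (Ks j) ->
  exists eta, 0 < eta /\
    forall gamma, 0 < gamma ->
      exists eps0 (zeta : R -> R), 0 < eps0 /\
        (forall eps, 0 < eps < eps0 -> 0 <= zeta eps <= 1) /\
        (forall e, 0 < e -> exists del, 0 < del /\
           forall eps, 0 < eps < eps0 -> eps < del -> Rabs (zeta eps) < e) /\
        (forall eps, 0 < eps < eps0 ->
           forall x, Nbhd M (Ks j) eta x ->
             prob_tau_gt M (p eps) (Nbhd M (Ks j) eta) (exp (gamma / eps)) x
               <= zeta eps).
Proof.
  intros [HMc [HFM [HFc [HFB [Hker [_ [HM0c _]]]]]]] [Hrho0 [Hcont [Hzero [Hiii [Hlower _]]]]]
    HK1 HK2 Hj HnQA.
  apply (escape_from_non_quasiattractor M M0 F p rho v Ks j); auto.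
  - intros eps Heps x Hx. apply Hker; auto.
  - intros x y r Hx Hy Hr. specialize (Hcont x y Hx Hy). rewrite Hr in Hcont. exact Hcont.
Qed.
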